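(* Let $\mathcal P(\boldsymbol\alpha,\boldsymbol\ell)$ be a curvilinear polygon with $n$ vertices. Then $\sigma\ge0$ is a quasi-eigenvalue of $\mathcal P$ if and only if $F^{\mathcal P}(\boldsymbol\alpha,\boldsymbol\ell,\sigma)=0$, where $$F^{\mathcal P}(\boldsymbol\alpha,\boldsymbol\ell,\sigma)=\sum_{\substack{\boldsymbol\zeta\in\{\pm1\}^n\\ \zeta_1=1}}\mathfrak p_{\boldsymbol\zeta}(\boldsymbol\alpha)\cos(\boldsymbol\ell\cdot\boldsymbol\zeta\,\sigma)-\prod_{j=1}^n\sin\Big(\frac{\pi^2}{2\alpha_j}\Big).$$ Moreover, the multiplicity of a quasi-eigenvalue $\sigma>0$ equals its multiplicity as a root of $F^{\mathcal P}(\boldsymbol\alpha,\boldsymbol\ell,\cdot)$, and the multiplicity of the quasi-eigenvalue $\sigma=0$ equals half its multiplicity as a root of $F^{\mathcal P}(\boldsymbol\alpha,\boldsymbol\ell,\cdot)$.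
   Context: For $\boldsymbol\zeta=(\zeta_1,\dots,\zeta_n)\in\{\pm1\}^n$ with cyclic convention $\zeta_{n+1}=\zeta_1$, let $\mathrm{ch}(\boldsymbol\zeta)=\{j\in\{1,\dots,n\}:\zeta_j\ne\zeta_{j+1}\}$ and $\mathfrak p_{\boldsymbol\zeta}(\boldsymbol\alpha)=\prod_{j\in\mathrm{ch}(\boldsymbol\zeta)}\cos(\pi^2/(2\alpha_j))$ (empty product $=1$); $\boldsymbol\ell\cdot\boldsymbol\zeta=\sum_j\ell_j\zeta_j$. A curvilinear polygon $\mathcal P(\boldsymbol\alpha,\boldsymbol\ell)$: bounded simply connected planar domain with boundary a closed non-self-intersecting curve of $n$ smooth arcs $I_1,\dots,I_n$, vertices $V_1,\dots,V_n$ clockwise (cyclic indices), $I_j$ joins $V_{j-1},V_j$, length $\ell_j>0$, interior angle $\alpha_j\in(0,\pi)$ at $V_j$. $\mathcal E=\{\pi/(2k):k\in\mathbb N\}$, $\mathcal O(\pi/(2k))=(-1)^k$. For $\alpha\notin\mathcal E$, $\mathtt A(\alpha)=\begin{pmatrix}\csc\frac{\pi^2}{2\alpha}&-i\cot\frac{\pi^2}{2\alpha}\\ i\cot\frac{\pi^2}{2\alpha}&\csc\frac{\pi^2}{2\alpha}\end{pmatrix}$; $\mathtt B(\ell,\sigma)=\operatorname{diag}(e^{i\ell\sigma},e^{-i\ell\sigma})$. Quasi-eigenvalues: if no angle is in $\mathcal E$, $\sigma\ge0$ is a quasi-eigenvalue iff $1$ is an eigenvalue of $\mathtt T(\sigma)=\mathtt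 A(\alpha_n)\mathtt B(\ell_n,\sigma)\cdots\mathtt A(\alpha_1)\mathtt B(\ell_1,\sigma)$; multiplicity of $\sigma>0$ is the geometric multiplicity of that eigenvalue, multiplicity of $0$ is $1$. Otherwise, with exceptional vertices $V_{E_1},\dots,V_{E_K}$, $1\le E_1<\dots<E_K=n$, $E_0:=E_K$, set $\mathtt U_\kappa(\sigma)=\mathtt B(\ell_{E_\kappa},\sigma)\mathtt A(\alpha_{E_\kappa-1})\mathtt B(\ell_{E_\kappa-1},\sigma)\cdots\mathtt A(\alpha_{E_{\kappa-1}+1})\mathtt B(\ell_{E_{\kappa-1}+1},\sigma)$ (indices mod $n$), $\mathbf X_{\rm even}=\frac1{\sqrt2}(e^{-i\pi/4},e^{i\pi/4})^T$, $\mathbf X_{\rm odd}=\frac1{\sqrt2}(e^{i\pi/4},e^{-i\pi/4})^T$, $\mathbf X(\alpha)=\mathbf X_{\rm even}$ if $\mathcal O(\alpha)=1$, else $\mathbf X_{\rm odd}$; $u\cdot v=u_1\bar v_1+u_2\bar v_2$. Then $\sigma\ge0$ is a quasi-eigenvalue iff $\mathtt U_\kappa(\sigma)\mathbf X(\alpha_{E_{\kappa-1}})\cdot\mathbf X(\alpha_{E_\kappa})=0$ for some $\kappa$; multiplicity of $\sigma>0$ is the number of such $\kappa$, and of $\sigma=0$ is half the number of $\kappa$ with $\mathcal O(\alpha_{E_{\kappa-1}})\neq\mathcal O(\alpha_{E_\kappa})$. *)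

From Stdlib Require Import Reals Lra Lia List Arith Bool.
From Stdlib Require Import ClassicalDescription.
Import ListNotations.
Open Scope R_scope.

Definition decP (P : Prop) : bool :=
  if excluded_middle_informative P then true else false.

(** Cyclic indices: vertices/arcs are numbered 1..n, index j is read mod n
    in {1,..,n}; e.g. wrap n 0 = n, wrap n (n+1) = 1. *)
Definition wrap (n j : nat) : nat := S ((j + n - 1) mod n).

Definition sum1n (n : nat) (f : nat -> R) : R := fold_right Rplus 0 (map f (seq 1 n)).
Definition prod1n (n : nat) (f : nat -> R) : R := fold_right Rmult 1 (map f (seq 1 n)).

Definition C : Type := (R * R)%type.
Definition C0 : C := (0, 0).
Definition C1 : C := (1, 0).
Definition RtoC (r : R) : C := (r, 0).
Definition Cadd (z w : C) : C := (fst z + fst w, snd z + snd w).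
Definition Cmul (z w : C) : C :=
  (fst z * fst w - snd z * snd w, fst z * snd w + snd z * fst w).
Definition Cconj (z : C) : C := (fst z, - snd z).
Definition Cexpi (t : R) : C := (cos t, sin t).

Definition C2 : Type := (C * C)%type.
Definition zero2 : C2 := (C0, C0).
Record M2 : Type := mkM2 { m11 : C; m12 : C; m21 : C; m22 : C }.
Definition Id2 : M2 := mkM2 C1 C0 C0 C1.
Definition Mmul (A B : M2) : M2 :=
  mkM2 (Cadd (Cmul (m11 A) (m11 B)) (Cmul (m12 A) (m21 B)))
       (Cadd (Cmul (m11 A) (m12 B)) (Cmul (m12 A) (m22 B)))
       (Cadd (Cmul (m21 A) (m11 B)) (Cmul (m22 A) (m21 B)))
       (Cadd (Cmul (m21 A) (m12 B)) (Cmul (m22 A) (m22 B))).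
Definition Mvec (A : M2) (v : C2) : C2 :=
  (Cadd (Cmul (m11 A) (fst v)) (Cmul (m12 A) (snd v)),
   Cadd (Cmul (m21 A) (fst v)) (Cmul (m22 A) (snd v))).
Definition vadd (u v : C2) : C2 := (Cadd (fst u) (fst v), Cadd (snd u) (snd v)).
Definition vscal (c : C) (v : C2) : C2 := (Cmul c (fst v), Cmul c (snd v)).
Definition cdot (u v : C2) : C :=
  Cadd (Cmul (fst u) (Cconj (fst v))) (Cmul (snd u) (Cconj (snd v))).

Fixpoint lincomb (cs : list C) (vs : list C2) : C2 :=
  match cs, vs with
  | c :: cs', v :: vs' => vadd (vscal c v) (lincomb cs' vs')
  | _, _ => zero2
  end.
Definition lin_indep (vs : list C2) : Prop :=
  forall cs : list C, length cs = length vs -> lincomb cs vs = zero2 ->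
    Forall (fun c => c = C0) cs.

(** Geometric multiplicity of the eigenvalue 1 of M = dim ker (M - I):
    the maximal size of a linearly independent family of fixed vectors. *)
Definition fixed_vec (M : M2) (v : C2) : Prop := Mvec M v = v.
Definition geom_mult_1 (M : M2) (m : nat) : Prop :=
  (exists vs, length vs = m /\ Forall (fixed_vec M) vs /\ lin_indep vs) /\
  (forall vs, Forall (fixed_vec M) vs -> lin_indep vs -> (length vs <= m)%nat).
Definition eigenvalue_1 (M : M2) : Prop :=
  exists v, v <> zero2 /\ fixed_vec M v.

Definition exceptional (a : R) : Prop :=
  exists k : nat, (1 <= k)%nat /\ a = PI / (2 * INR k).
Definition excb (a : R) : bool := decP (exceptional a).
(** O(pi/(2k)) = (-1)^k ; O_is_even a  <->  a in E and O(a) = 1 *)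
Definition O_is_even (a : R) : Prop :=
  exists k : nat, (1 <= k)%nat /\ a = PI / (2 * INR k) /\ Nat.Even k.

Definition Xeven : C2 :=
  (Cmul (RtoC (/ sqrt 2)) (Cexpi (- (PI / 4))), Cmul (RtoC (/ sqrt 2)) (Cexpi (PI / 4))).
Definition Xodd : C2 :=
  (Cmul (RtoC (/ sqrt 2)) (Cexpi (PI / 4)), Cmul (RtoC (/ sqrt 2)) (Cexpi (- (PI / 4)))).
Definition Xof (a : R) : C2 := if decP (O_is_even a) then Xeven else Xodd.

Definition theta (a : R) : R := PI ^ 2 / (2 * a).
Definition Amat (a : R) : M2 :=
  let cs := / sin (theta a) in
  let ct := cos (theta a) / sin (theta a) in
  mkM2 (RtoC cs) (0, - ct) (0, ct) (RtoC cs).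
Definition Bmat (l sigma : R) : M2 :=
  mkM2 (Cexpi (l * sigma)) C0 C0 (Cexpi (- (l * sigma))).

Section Polygon.
Variables (n : nat) (alpha ell : nat -> R).

Definition al (j : nat) : R := alpha (wrap n j).
Definition ll (j : nat) : R := ell (wrap n j).

Fixpoint Tpart (k : nat) (sigma : R) : M2 :=
  match k with
  | O => Id2
  | S k' => Mmul (Mmul (Amat (al k)) (Bmat (ll k) sigma)) (Tpart k' sigma)
  end.
Definition Tmat (sigma : R) : M2 := Tpart n sigma.

Definition any_exceptional : Prop :=
  exists j, (1 <= j <= n)%nat /\ exceptional (alpha j).

Fixpoint back (fuel j : nat) (sigma : R) : M2 :=
  match fuel with
  | O => Id2
  | S f => if excb (al j) then Id2
           else Mmul (Mmul (Amat (al j)) (Bmat (ll j) sigma))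
                     (back f (wrap n (j - 1)) sigma)
  end.
(** Previous exceptional vertex (cyclically) before vertex E (E itself if it
    is the only exceptional vertex). *)
Fixpoint prevE (fuel j : nat) : nat :=
  match fuel with
  | O => j
  | S f => if excb (al j) then j else prevE f (wrap n (j - 1))
  end.
Definition prev_exc (E : nat) : nat := prevE (n - 1) (wrap n (E - 1)).

(** For consecutive exceptional vertices E_{k-1}, E_k = E:
    U_k = B(ell_E) A(alpha_{E-1}) B(ell_{E-1}) ... A(alpha_{E_{k-1}+1}) B(ell_{E_{k-1}+1}). *)
Definition Umat (E : nat) (sigma : R) : M2 :=
  Mmul (Bmat (ll E) sigma) (back (n - 1) (wrap n (E - 1)) sigma).

Definition kappa_cond (E : nat) (sigma : R) : Prop :=
  exceptional (alpha E) /\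
  cdot (Mvec (Umat E sigma) (Xof (al (prev_exc E)))) (Xof (alpha E)) = C0.

Definition quasi_eigenvalue (sigma : R) : Prop :=
  0 <= sigma /\
  ((~ any_exceptional /\ eigenvalue_1 (Tmat sigma)) \/
   (any_exceptional /\ exists E, (1 <= E <= n)%nat /\ kappa_cond E sigma)).

Definition qe_mult_pos (sigma : R) (m : nat) : Prop :=
  (~ any_exceptional /\ geom_mult_1 (Tmat sigma) m) \/
  (any_exceptional /\
   m = length (filter (fun E => decP (kappa_cond E sigma)) (seq 1 n))).

Definition qe_mult_zero : R :=
  if decP any_exceptional then
    INR (length (filter (fun E => decP (exceptional (alpha E) /\
             ~ (O_is_even (al (prev_exc E)) <-> O_is_even (alpha E)))) (seq 1 n))) / 2
  else 1.

(** zeta is encoded by l : list bool of length n-1 giving zeta_2..zeta_n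
    (true = +1), with zeta_1 = +1. *)
Fixpoint all_sign_lists (k : nat) : list (list bool) :=
  match k with
  | O => [[]]
  | S k' => map (cons true) (all_sign_lists k') ++ map (cons false) (all_sign_lists k')
  end.
Definition zb (l : list bool) (j : nat) : bool :=
  let j' := wrap n j in if Nat.eqb j' 1 then true else nth (j' - 2) l true.
Definition zeta (l : list bool) (j : nat) : R := if zb l j then 1 else -1.
Definition in_ch (l : list bool) (j : nat) : bool := negb (Bool.eqb (zb l j) (zb l (S j))).
Definition pzeta (l : list bool) : R :=
  prod1n n (fun j => if in_ch l j then cos (theta (alpha j)) else 1).
Definition elldotzeta (l : list bool) : R := sum1n n (fun j => ell j * zeta l j).

Definition FP (sigma : R) : R :=
  fold_right Rplus 0
    (map (fun l => pzeta l * cos (elldotzeta l * sigma)) (all_sign_lists (n - 1)))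
  - prod1n n (fun j => sin (theta (alpha j))).

End Polygon.

Definition root_mult (f : R -> R) (x : R) (m : nat) : Prop :=
  exists D : nat -> R -> R,
    (forall y, D O y = f y) /\
    (forall k y, derivable_pt_lim (D k) y (D (S k) y)) /\
    (forall k, (k < m)%nat -> D k x = 0) /\
    D m x <> 0.

(* Up to the scalar 1/sin θ_j (θ_j = π²/(2α_j)), every complex transfer
   factor A(α_j) B(ℓ_j,σ) is the image, under a fixed change of basis [embed],
   of the real matrix  vfac(c_j,ℓ_j,σ) = diag(1+c_j, 1-c_j) · rot(ℓ_j σ),
   c_j = cos θ_j.  Expanding the product P(σ) = vfac_n ⋯ vfac_1 over sign paths
   ζ gives  F^P(σ) = tr P(σ) / 2 − Π_j sin θ_j  ([FP_trace]).
   - No exceptional angle: T(σ) = embed(P(σ) / Π sin θ_j) has determinant 1, so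
     1 is an eigenvalue iff tr = 2 iff F^P = 0, with geometric multiplicity 2 iff
     T = I and 1 otherwise.  The "Wronskian" u ∧ P'(σ)u is positive (the chain
     turns strictly in one direction, [wronskian_pos]); hence F^P has a simple
     zero when P ≠ (Π sin θ_j) I and a double zero when P is scalar.
   - Some exceptional angle: there sin θ_j = 0, c_j = ±1 and vfac_j has rank one,
     so tr P factorizes as Π_E 2 g_E(σ) over the exceptional vertices E, where
     g_E is the entry of the arc product tested by the κ-condition of E
     ([trace_factorization]).  Each g_E has only simple zeros (Wronskian again),
     so the root multiplicity of F^P counts the vanishing κ-conditions; at σ = 0
     every arc product is diagonal and g_E(0) = 0 iff the parities O(α) of E and
     of the previous exceptional vertex differ. *)

From Stdlib Require Import Reals Lra Lia List Arith Bool ZArith FunctionalExtensionality.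
From Pilot Require Import Defs.
Import ListNotations.
Open Scope R_scope.

(** * Derivative towers and multiplicities of roots *)

Definition deriv_tower (f : R -> R) (D : nat -> R -> R) : Prop :=
  (forall y, D O y = f y) /\ (forall k y, derivable_pt_lim (D k) y (D (S k) y)).
Definition smooth (f : R -> R) : Prop := exists D, deriv_tower f D.

Lemma dpl_ext (f g : R -> R) x l :
  (forall y, f y = g y) -> derivable_pt_lim f x l -> derivable_pt_lim g x l.
Proof.
  intros H H1. assert (f = g) by (apply functional_extensionality; auto). subst; auto.
Qed.
Lemma dpl_eq f x l l' : l = l' -> derivable_pt_lim f x l -> derivable_pt_lim f x l'.
Proof. intros ->; auto. Qed.
Lemma dpl_plus f g x a b : derivable_pt_lim f x a -> derivable_pt_lim g x b ->
  derivable_pt_lim (fun z => f z + g z) x (a + b).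
Proof. intros; apply (derivable_pt_lim_plus f g); auto. Qed.
Lemma dpl_minus f g x a b : derivable_pt_lim f x a -> derivable_pt_lim g x b ->
  derivable_pt_lim (fun z => f z - g z) x (a - b).
Proof. intros; apply (derivable_pt_lim_minus f g); auto. Qed.
Lemma dpl_mult f g x a b : derivable_pt_lim f x a -> derivable_pt_lim g x b ->
  derivable_pt_lim (fun z => f z * g z) x (a * g x + f x * b).
Proof. intros; apply (derivable_pt_lim_mult f g); auto. Qed.
Lemma dpl_const c x : derivable_pt_lim (fun _ => c) x 0.
Proof. apply (dpl_ext (fct_cte c)). intros; reflexivity. apply derivable_pt_lim_const. Qed.
Lemma dpl_scal c f x a : derivable_pt_lim f x a -> derivable_pt_lim (fun z => c * f z) x (c * a).
Proof. intros H. eapply dpl_eq; [|apply dpl_mult; [apply dpl_const|exact H]]. cbv beta; ring. Qed.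

Lemma deriv_tower_unique f D1 D2 :
  deriv_tower f D1 -> deriv_tower f D2 -> forall k y, D1 k y = D2 k y.
Proof.
  intros [H10 H1] [H20 H2] k. induction k; intro y.
  - rewrite H10, H20; auto.
  - apply (uniqueness_limite (D2 k) y).
    + apply (dpl_ext (D1 k)); auto.
    + apply H2.
Qed.

Lemma root_mult_tower f D x m : deriv_tower f D ->
  (root_mult f x m <-> ((forall k, (k < m)%nat -> D k x = 0) /\ D m x <> 0)).
Proof.
  intros HT. split.
  - intros [D' [H0 [H1 [H2 H3]]]].
    assert (HT' : deriv_tower f D') by (split; auto).
    rewrite !(deriv_tower_unique f D D' HT HT'). split; auto.
    intros k Hk. rewrite (deriv_tower_unique f D D' HT HT'). auto.
  - intros [H2 H3]. destruct HT as [H0 H1]. exists D. repeat split; auto.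
Qed.

Lemma root_mult_unique f x m1 m2 : root_mult f x m1 -> root_mult f x m2 -> m1 = m2.
Proof.
  intros [D [H0 [Hd [Hz Hnz]]]] H2.
  apply (root_mult_tower f D x m2 (conj H0 Hd)) in H2. destruct H2 as [Hz2 Hnz2].
  destruct (lt_eq_lt_dec m1 m2) as [[Hlt|Heq]|Hgt]; auto.
  - exfalso. apply Hnz, Hz2. auto.
  - exfalso. apply Hnz2, Hz. auto.
Qed.

Lemma root_mult_ext f g x m : (forall y, f y = g y) -> root_mult f x m -> root_mult g x m.
Proof. intros H [D [H0 R]]. exists D. split; auto. intro y. rewrite H0; auto. Qed.

Lemma smooth_ext f g : (forall y, f y = g y) -> smooth f -> smooth g.
Proof. intros H [D [H0 H1]]. exists D. split; auto. intro y. rewrite H0; auto. Qed.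

Fixpoint sumN (k : nat) (F : nat -> R) : R :=
  match k with O => 0 | S k' => sumN k' F + F k' end.

Lemma sumN_ext k F G : (forall i, (i < k)%nat -> F i = G i) -> sumN k F = sumN k G.
Proof.
  induction k; simpl; intros; auto. rewrite IHk by (intros; apply H; lia). rewrite H by lia. auto.
Qed.

Lemma sumN_shift k F : sumN (S k) F = F O + sumN k (fun j => F (S j)).
Proof. induction k; simpl in *; [lra|]. rewrite IHk. lra. Qed.

Lemma sumN_plus k F G : sumN k (fun i => F i + G i) = sumN k F + sumN k G.
Proof. induction k; simpl; lra. Qed.

Lemma sumN_zero k F : (forall i, (i < k)%nat -> F i = 0) -> sumN k F = 0.
Proof.
  induction k; simpl; intros; auto. rewrite IHk by (intros; apply H; lia). rewrite H by lia. lra.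
Qed.

Lemma sumN_single k F i0 : (i0 < k)%nat -> (forall i, (i < k)%nat -> i <> i0 -> F i = 0) ->
  sumN k F = F i0.
Proof.
  induction k; intros Hi H; [lia|]. simpl.
  destruct (Nat.eq_dec i0 k) as [->|Hne].
  - rewrite sumN_zero. lra. intros i Hi'. apply H; lia.
  - rewrite IHk by (auto; lia). rewrite (H k) by lia. lra.
Qed.

Lemma dpl_sumN k (F : nat -> R -> R) (F' : nat -> R) y :
  (forall i, derivable_pt_lim (F i) y (F' i)) ->
  derivable_pt_lim (fun z => sumN k (fun i => F i z)) y (sumN k F').
Proof.
  intros H. induction k; simpl.
  - apply dpl_const.
  - apply (dpl_plus (fun z => sumN k (fun i => F i z)) (F k)); auto.
Qed.

Fixpoint binom (k i : nat) : R :=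
  match k, i with
  | _, O => 1
  | O, S _ => 0
  | S k', S i' => binom k' i' + binom k' (S i')
  end.

Lemma binom_big k i : (k < i)%nat -> binom k i = 0.
Proof.
  revert i; induction k; intros i H; destruct i; simpl; try lia; auto.
  rewrite !IHk by lia. lra.
Qed.

Lemma binom_pos k i : (i <= k)%nat -> 0 < binom k i.
Proof.
  revert i; induction k; intros i H; destruct i; simpl; try lra; try lia.
  destruct (Nat.eq_dec i k) as [->|Hne].
  - rewrite (binom_big k (S k)) by lia. rewrite Rplus_0_r. apply IHk; lia.
  - assert (0 < binom k i) by (apply IHk; lia). assert (0 < binom k (S i)) by (apply IHk; lia). lra.
Qed.

Definition leibniz (Df Dg : nat -> R -> R) (k : nat) (y : R) : R :=
  sumN (S k) (fun i => binom k i * Df i y * Dg (k - i)%nat y).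

(* Pascal's rule, rearranged: the Leibniz sums telescope under differentiation. *)
Lemma leibniz_pascal (Df Dg : nat -> R -> R) k y :
  sumN (S k) (fun i => binom k i * (Df (S i) y * Dg (k-i)%nat y + Df i y * Dg (S (k-i)) y)) =
  sumN (S (S k)) (fun i => binom (S k) i * Df i y * Dg (S k - i)%nat y).
Proof.
  replace (sumN (S k) (fun i => binom k i * (Df (S i) y * Dg (k - i)%nat y + Df i y * Dg (S (k - i)) y)))
    with (sumN (S k) (fun i => binom k i * Df (S i) y * Dg (k - i)%nat y) +
          sumN (S k) (fun i => binom k i * Df i y * Dg (S (k - i)) y)).
  2:{ rewrite <- sumN_plus. apply sumN_ext. intros; ring. }
  rewrite (sumN_shift (S k) (fun i => binom (S k) i * Df i y * Dg (S k - i)%nat y)).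
  rewrite (sumN_shift k (fun i => binom k i * Df i y * Dg (S (k - i)) y)).
  simpl (binom (S k) 0). simpl (S k - 0)%nat. rewrite Nat.sub_0_r.
  assert (E1 : sumN (S k) (fun j => binom (S k) (S j) * Df (S j) y * Dg (S k - S j)%nat y) =
     sumN (S k) (fun i => binom k i * Df (S i) y * Dg (k - i)%nat y) +
     sumN (S k) (fun j => binom k (S j) * Df (S j) y * Dg (k - j)%nat y)).
  { rewrite <- sumN_plus. apply sumN_ext. intros i Hi. simpl. ring. }
  assert (E2 : sumN (S k) (fun j => binom k (S j) * Df (S j) y * Dg (k - j)%nat y) =
     sumN k (fun j => binom k (S j) * Df (S j) y * Dg (S (k - S j)) y)).
  { simpl. rewrite binom_big, Nat.sub_diag by lia. rewrite !Rmult_0_l, Rplus_0_r.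
    apply sumN_ext. intros i Hi. replace (k - i)%nat with (S (k - S i)) by lia. auto. }
  rewrite E1, E2. replace (binom k 0) with 1 by (destruct k; reflexivity). ring.
Qed.

Lemma leibniz_deriv Df Dg k y :
  (forall k y, derivable_pt_lim (Df k) y (Df (S k) y)) ->
  (forall k y, derivable_pt_lim (Dg k) y (Dg (S k) y)) ->
  derivable_pt_lim (leibniz Df Dg k) y (leibniz Df Dg (S k) y).
Proof.
  intros Hf Hg. unfold leibniz. rewrite <- leibniz_pascal.
  apply (dpl_sumN (S k) (fun i z => binom k i * Df i z * Dg (k - i)%nat z)).
  intros i. apply (dpl_ext (fun z => binom k i * (Df i z * Dg (k-i)%nat z))). intros; ring.
  apply dpl_scal, (derivable_pt_lim_mult (Df i) (Dg (k-i)%nat)); auto.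
Qed.

Lemma deriv_tower_mult f g Df Dg : deriv_tower f Df -> deriv_tower g Dg ->
  deriv_tower (fun y => f y * g y) (leibniz Df Dg).
Proof.
  intros [Hf0 Hf] [Hg0 Hg]. split.
  - intro y. unfold leibniz. simpl. rewrite Hf0, Hg0. ring.
  - intros; apply leibniz_deriv; auto.
Qed.

Lemma smooth_mult f g : smooth f -> smooth g -> smooth (fun y => f y * g y).
Proof. intros [Df Hf] [Dg Hg]. eexists; apply deriv_tower_mult; eauto. Qed.

Lemma smooth_plus f g : smooth f -> smooth g -> smooth (fun y => f y + g y).
Proof.
  intros [Df [Hf0 Hf]] [Dg [Hg0 Hg]]. exists (fun k y => Df k y + Dg k y). split.
  - intros; rewrite Hf0, Hg0; auto.
  - intros. apply dpl_plus; auto.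
Qed.

Lemma smooth_const c : smooth (fun _ => c).
Proof.
  exists (fun k y => match k with O => c | _ => 0 end). split; auto.
  intros k y. destruct k; apply dpl_const.
Qed.

Lemma dpl_cosl l y : derivable_pt_lim (fun z => cos (l * z)) y (- (l * sin (l * y))).
Proof.
  assert (H1 : derivable_pt_lim (fun z => l * z) y l).
  { eapply dpl_eq; [|apply dpl_scal, derivable_pt_lim_id]. ring. }
  assert (H2 := derivable_pt_lim_comp _ cos y _ _ H1 (derivable_pt_lim_cos (l * y))).
  apply (dpl_ext (comp cos (fun z => l * z))). intros; reflexivity.
  eapply dpl_eq; [|exact H2]. ring.
Qed.
Lemma dpl_sinl l y : derivable_pt_lim (fun z => sin (l * z)) y (l * cos (l * y)).
Proof.
  assert (H1 : derivable_pt_lim (fun z => l * z) y l).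
  { eapply dpl_eq; [|apply dpl_scal, derivable_pt_lim_id]. ring. }
  assert (H2 := derivable_pt_lim_comp _ sin y _ _ H1 (derivable_pt_lim_sin (l * y))).
  apply (dpl_ext (comp sin (fun z => l * z))). intros; reflexivity.
  eapply dpl_eq; [|exact H2]. ring.
Qed.

Lemma dpl_cos_aff b c y :
  derivable_pt_lim (fun z => cos (b * z + c)) y (b * cos (b * y + c + PI/2)).
Proof.
  assert (H1 : derivable_pt_lim (fun z => b * z + c) y b).
  { eapply dpl_eq; [|apply dpl_plus; [apply dpl_scal, derivable_pt_lim_id|apply dpl_const]]. ring. }
  assert (H2 := derivable_pt_lim_comp _ cos y _ _ H1 (derivable_pt_lim_cos (b * y + c))).
  rewrite cos_plus, cos_PI2, sin_PI2.
  apply (dpl_ext (comp cos (fun z => b * z + c))). intros; reflexivity.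
  eapply dpl_eq; [|exact H2]. ring.
Qed.

Lemma smooth_cos_aff a b c : smooth (fun y => a * cos (b * y + c)).
Proof.
  exists (fun k y => a * b ^ k * cos (b * y + c + INR k * (PI/2))). split.
  - intros y. simpl. rewrite Rmult_0_l, Rplus_0_r. ring.
  - intros k y.
    apply (dpl_ext (fun z => (a * b ^ k) * cos (b * z + (c + INR k * (PI/2))))).
    { intros; rewrite Rplus_assoc; auto. }
    replace (a * b ^ S k * cos (b * y + c + INR (S k) * (PI / 2))) with
      ((a * b ^ k) * (b * cos (b * y + (c + INR k * (PI/2)) + PI/2))).
    2:{ rewrite S_INR. simpl. replace (b * y + (c + INR k * (PI / 2)) + PI / 2) with
         (b * y + c + (INR k + 1) * (PI / 2)) by ring. ring. }
    apply dpl_scal, dpl_cos_aff.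
Qed.

Lemma smooth_cos b : smooth (fun y => cos (b * y)).
Proof.
  apply (smooth_ext (fun y => 1 * cos (b * y + 0))). intros; rewrite Rplus_0_r; ring.
  apply smooth_cos_aff.
Qed.

Lemma smooth_sin b : smooth (fun y => sin (b * y)).
Proof.
  apply (smooth_ext (fun y => 1 * cos (b * y + - (PI/2)))).
  { intros y. rewrite Rmult_1_l, cos_plus, cos_neg, sin_neg, cos_PI2, sin_PI2. ring. }
  apply smooth_cos_aff.
Qed.

Lemma root_mult_mult f g x a b : root_mult f x a -> root_mult g x b ->
  root_mult (fun y => f y * g y) x (a + b).
Proof.
  intros [Df [Hf0 [Hf [Hfz Hfnz]]]] [Dg [Hg0 [Hg [Hgz Hgnz]]]].
  assert (HT := deriv_tower_mult f g Df Dg (conj Hf0 Hf) (conj Hg0 Hg)).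
  assert (Hterm : forall k i, (k < a + b)%nat \/ (k = a + b /\ i <> a)%nat ->
            (i <= k)%nat -> Df i x * Dg (k - i)%nat x = 0).
  { intros k i Hk Hi. destruct (lt_dec i a) as [Hia|Hia].
    - rewrite Hfz by auto. ring.
    - rewrite Hgz by lia. ring. }
  apply (root_mult_tower _ _ x (a+b) HT). split.
  - intros k Hk. unfold leibniz. apply sumN_zero. intros i Hi.
    rewrite Rmult_assoc, (Hterm k i) by lia. ring.
  - unfold leibniz. rewrite (sumN_single _ _ a) by
      (lia || (intros i Hi Hne; rewrite Rmult_assoc, (Hterm (a + b)%nat i) by lia; ring)).
    replace (a + b - a)%nat with b by lia.
    assert (0 < binom (a+b) a) by (apply binom_pos; lia).
    intro Hc. apply Rmult_integral in Hc. destruct Hc as [Hc|Hc]; auto.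
    apply Rmult_integral in Hc. destruct Hc; auto. lra.
Qed.

Lemma root_mult_nonzero f x : smooth f -> f x <> 0 -> root_mult f x 0.
Proof. intros [D [H0 H1]] Hx. exists D. repeat split; auto. intros; lia. rewrite H0; auto. Qed.

Lemma root_mult_simple f x l : smooth f -> f x = 0 -> derivable_pt_lim f x l -> l <> 0 ->
  root_mult f x 1.
Proof.
  intros [D [H0 H1]] Hx Hd Hl. exists D. repeat split; auto.
  - intros k Hk. assert (k = O) by lia. subst. rewrite H0; auto.
  - replace (D 1%nat x) with l; auto. apply (uniqueness_limite f x); auto.
    apply (dpl_ext (D O)); auto.
Qed.

Lemma root_mult_double f f' x l : smooth f -> (forall y, derivable_pt_lim f y (f' y)) ->
  f x = 0 -> f' x = 0 -> derivable_pt_lim f' x l -> l <> 0 -> root_mult f x 2.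
Proof.
  intros [D [H0 H1]] Hd Hx Hx' Hd2 Hl.
  assert (E1 : forall y, D 1%nat y = f' y).
  { intros y. apply (uniqueness_limite f y); auto. apply (dpl_ext (D O)); auto. }
  exists D. repeat split; auto.
  - intros k Hk. destruct k as [|[|k]]; try lia. rewrite H0; auto. rewrite E1; auto.
  - replace (D 2%nat x) with l; auto. apply (uniqueness_limite f' x); auto.
    apply (dpl_ext (D 1%nat)); auto.
Qed.

(** * Real 2×2 matrices and their complex embedding *)

Record RMat : Type := mkRMat { r11 : R; r12 : R; r21 : R; r22 : R }.
Definition RId : RMat := mkRMat 1 0 0 1.
Definition RZero : RMat := mkRMat 0 0 0 0.
Definition RMmul (A B : RMat) : RMat :=
  mkRMat (r11 A * r11 B + r12 A * r21 B) (r11 A * r12 B + r12 A * r22 B)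
         (r21 A * r11 B + r22 A * r21 B) (r21 A * r12 B + r22 A * r22 B).
Definition RMadd (A B : RMat) : RMat :=
  mkRMat (r11 A + r11 B) (r12 A + r12 B) (r21 A + r21 B) (r22 A + r22 B).
Definition RMscal (c : R) (A : RMat) : RMat := mkRMat (c * r11 A) (c * r12 A) (c * r21 A) (c * r22 A).
Definition rdet (A : RMat) : R := r11 A * r22 A - r12 A * r21 A.
Definition rtr (A : RMat) : R := r11 A + r22 A.
Definition entry (b b' : bool) (Y : RMat) : R :=
  match b, b' with
  | true, true => r11 Y | true, false => r12 Y | false, true => r21 Y | false, false => r22 Y
  end.

(* The real factor of a vertex with c = cos θ, arc length l, at spectral
   parameter s:  vfac c l s = diag(1+c, 1-c) · rot(l s). *)
Definition diag_pm (c : R) : RMat := mkRMat (1 + c) 0 0 (1 - c).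
Definition rot (p : R) : RMat := mkRMat (cos p) (- sin p) (sin p) (cos p).
Definition vfac (c l s : R) : RMat := RMmul (diag_pm c) (rot (l * s)).

Lemma RMat_eq (A B : RMat) :
  r11 A = r11 B -> r12 A = r12 B -> r21 A = r21 B -> r22 A = r22 B -> A = B.
Proof. destruct A, B; simpl; intros; subst; auto. Qed.

Lemma RMat_eq_dec (A B : RMat) : {A = B} + {A <> B}.
Proof. apply ClassicalDescription.excluded_middle_informative. Qed.

Lemma RMmul_assoc A B C : RMmul A (RMmul B C) = RMmul (RMmul A B) C.
Proof. apply RMat_eq; unfold RMmul; simpl; ring. Qed.
Lemma RMmul_1_l A : RMmul RId A = A.
Proof. apply RMat_eq; unfold RMmul, RId; simpl; ring. Qed.
Lemma RMmul_1_r A : RMmul A RId = A.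
Proof. apply RMat_eq; unfold RMmul, RId; simpl; ring. Qed.
Lemma rdet_mul A B : rdet (RMmul A B) = rdet A * rdet B.
Proof. unfold rdet, RMmul; simpl; ring. Qed.
Lemma rtr_comm A B : rtr (RMmul A B) = rtr (RMmul B A).
Proof. unfold rtr, RMmul; simpl; ring. Qed.

Lemma rdet_vfac c l s : rdet (vfac c l s) = 1 - c ^ 2.
Proof.
  unfold vfac; rewrite rdet_mul. unfold rdet, diag_pm, rot; simpl.
  pose proof (sin2_cos2 (l * s)). unfold Rsqr in H. nra.
Qed.

Lemma vfac_zero l s : vfac 0 l s = rot (l * s).
Proof. apply RMat_eq; unfold vfac, RMmul, diag_pm, rot; simpl; ring. Qed.

Lemma C_eq (z w : C) : fst z = fst w -> snd z = snd w -> z = w.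
Proof. destruct z, w; simpl; intros; subst; auto. Qed.
Lemma C2_eq (u v : C2) : fst u = fst v -> snd u = snd v -> u = v.
Proof. destruct u, v; simpl; intros; subst; auto. Qed.
Lemma M2_eq (A B : M2) : m11 A = m11 B -> m12 A = m12 B -> m21 A = m21 B -> m22 A = m22 B -> A = B.
Proof. destruct A, B; simpl; intros; subst; auto. Qed.

Ltac cring := repeat (apply C2_eq || apply C_eq); simpl; ring.

Definition Mscal (c : R) (A : M2) : M2 :=
  mkM2 (Cmul (RtoC c) (m11 A)) (Cmul (RtoC c) (m12 A)) (Cmul (RtoC c) (m21 A)) (Cmul (RtoC c) (m22 A)).

Lemma Mmul_scal_l a A B : Mmul (Mscal a A) B = Mscal a (Mmul A B).
Proof. apply M2_eq; unfold Mmul, Mscal, Cmul, Cadd, RtoC; cring. Qed.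
Lemma Mmul_scal_r a A B : Mmul A (Mscal a B) = Mscal a (Mmul A B).
Proof. apply M2_eq; unfold Mmul, Mscal, Cmul, Cadd, RtoC; cring. Qed.
Lemma Mscal_scal a b A : Mscal a (Mscal b A) = Mscal (a * b) A.
Proof. apply M2_eq; unfold Mscal, Cmul, RtoC; cring. Qed.
Lemma Mscal_1 A : Mscal 1 A = A.
Proof. apply M2_eq; unfold Mscal, Cmul, RtoC; cring. Qed.

(* [embed] is conjugation by a fixed unitary change of basis; it is an
   injective algebra morphism from real to complex 2×2 matrices. *)
Definition embed (X : RMat) : M2 :=
  mkM2 ((r11 X + r22 X) / 2, (r21 X - r12 X) / 2)
       ((r12 X + r21 X) / 2, (r22 X - r11 X) / 2)
       ((r12 X + r21 X) / 2, (r11 X - r22 X) / 2)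
       ((r11 X + r22 X) / 2, (r12 X - r21 X) / 2).

Lemma embed_mul X Y : Mmul (embed X) (embed Y) = embed (RMmul X Y).
Proof. apply M2_eq; unfold Mmul, embed, RMmul, Cmul, Cadd; apply C_eq; simpl; field. Qed.
Lemma embed_id : embed RId = Id2.
Proof. apply M2_eq; unfold embed, RId, Id2, C1, C0; apply C_eq; simpl; field. Qed.
Lemma Mscal_embed c X : Mscal c (embed X) = embed (RMscal c X).
Proof. apply M2_eq; unfold Mscal, embed, RMscal, Cmul, RtoC; apply C_eq; simpl; field. Qed.

Definition cth (a : R) : R := cos (theta a).
Definition sth (a : R) : R := sin (theta a).
Definition Ahat (a : R) : M2 := mkM2 C1 (0, - cth a) (0, cth a) C1.

Lemma Amat_eq a : Amat a = Mscal (/ sth a) (Ahat a).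
Proof.
  apply M2_eq; unfold Amat, Ahat, Mscal, Cmul, RtoC, C1, sth, cth; apply C_eq; simpl;
  unfold Rdiv; ring.
Qed.

Lemma B_embed l s : Bmat l s = embed (rot (l * s)).
Proof.
  apply M2_eq; unfold Bmat, embed, rot, C0, Cexpi; apply C_eq; simpl;
  rewrite ?cos_neg, ?sin_neg; field.
Qed.

Lemma AB_embed a l s : Mmul (Ahat a) (Bmat l s) = embed (vfac (cth a) l s).
Proof.
  apply M2_eq; unfold Mmul, Ahat, Bmat, embed, vfac, RMmul, diag_pm, rot, Cmul, Cadd, C1, C0, Cexpi;
  apply C_eq; simpl; rewrite ?cos_neg, ?sin_neg; field.
Qed.

Lemma transfer_step a l s c X :
  Mmul (Mmul (Amat a) (Bmat l s)) (Mscal c (embed X)) =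
  Mscal (/ sth a * c) (embed (RMmul (vfac (cth a) l s) X)).
Proof.
  rewrite Amat_eq, Mmul_scal_l, AB_embed, Mmul_scal_l, Mmul_scal_r, embed_mul, Mscal_scal.
  reflexivity.
Qed.

Lemma inv_sqrt2_sq : / sqrt 2 * / sqrt 2 = / 2.
Proof. rewrite <- Rinv_mult, sqrt_sqrt; lra. Qed.

Lemma Xeven_val : Xeven = ((1/2, -1/2), (1/2, 1/2)).
Proof.
  unfold Xeven, Cmul, RtoC, Cexpi. rewrite cos_neg, sin_neg, cos_PI4, sin_PI4.
  pose proof inv_sqrt2_sq. replace (1 / sqrt 2) with (/ sqrt 2) by (unfold Rdiv; ring).
  set (q := / sqrt 2) in *. simpl. f_equal; f_equal; nra.
Qed.
Lemma Xodd_val : Xodd = ((1/2, 1/2), (1/2, -1/2)).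
Proof.
  unfold Xodd, Cmul, RtoC, Cexpi. rewrite cos_neg, sin_neg, cos_PI4, sin_PI4.
  pose proof inv_sqrt2_sq. replace (1 / sqrt 2) with (/ sqrt 2) by (unfold Rdiv; ring).
  set (q := / sqrt 2) in *. simpl. f_equal; f_equal; nra.
Qed.

Definition Xsel (b : bool) : C2 := if b then Xeven else Xodd.

(* Key point of the change of basis: the pairing  (M X_b') · X_b  of the
   κ-condition reads off one real entry of the embedded matrix. *)
Lemma cdot_embed c Y b b' :
  cdot (Mvec (Mscal c (embed Y)) (Xsel b')) (Xsel b) = (c * entry b b' Y, 0).
Proof.
  destruct b, b'; unfold Xsel; rewrite ?Xeven_val, ?Xodd_val;
  unfold cdot, Mvec, Mscal, embed, entry, Cmul, Cadd, Cconj, RtoC; apply C_eq; simpl; field.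
Qed.

(** * The eigenvalue 1 of a complex 2×2 matrix of determinant 1 *)

Definition Cdet (K : M2) : C :=
  Cadd (Cmul (m11 K) (m22 K)) (Cmul (-1, 0) (Cmul (m12 K) (m21 K))).
Definition cols (v w : C2) : M2 := mkM2 (fst v) (fst w) (snd v) (snd w).
Definition Cdet2 (v w : C2) : C := Cdet (cols v w).

Lemma Ceq_dec (z w : C) : {z = w} + {z <> w}.
Proof. apply ClassicalDescription.excluded_middle_informative. Qed.

Lemma Cmul_eq0 z w : Cmul z w = C0 -> z = C0 \/ w = C0.
Proof.
  destruct z as [a b], w as [c d]; unfold Cmul, C0; simpl; intro H; injection H; intros H1 H2.
  destruct (Req_EM_T (a*a+b*b) 0) as [E|E].
  - left. f_equal; nra.
  - right.
    assert (E1 : (a*a+b*b) * c = 0)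
      by (replace ((a*a+b*b)*c) with (a*(a*c-b*d) + b*(a*d+b*c)) by ring; rewrite H1, H2; ring).
    assert (E2 : (a*a+b*b) * d = 0)
      by (replace ((a*a+b*b)*d) with (a*(a*d+b*c) - b*(a*c-b*d)) by ring; rewrite H1, H2; ring).
    apply Rmult_integral in E1; apply Rmult_integral in E2.
    destruct E1; [contradiction|]; destruct E2; [contradiction|]. subst; auto.
Qed.

Lemma neg_nz z : z <> C0 -> Cmul (-1, 0) z <> C0.
Proof.
  intros H E. apply H. destruct z as [p q]. unfold Cmul, C0 in *; simpl in *.
  injection E; intros. f_equal; lra.
Qed.
Lemma C1_nz : C1 <> C0.
Proof. unfold C1, C0; intro E; injection E; intros; lra. Qed.

Lemma neq_zero2 (v : C2) : v <> zero2 -> fst v <> C0 \/ snd v <> C0.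
Proof.
  destruct v as [a b]; simpl; intro H.
  destruct (Ceq_dec a C0); destruct (Ceq_dec b C0); subst; auto; exfalso; apply H; reflexivity.
Qed.
Lemma nz_fst (v : C2) : fst v <> C0 -> v <> zero2.
Proof. intros H E. apply H. rewrite E. reflexivity. Qed.
Lemma nz_snd (v : C2) : snd v <> C0 -> v <> zero2.
Proof. intros H E. apply H. rewrite E. reflexivity. Qed.

Lemma Mvec_eq0 K v : Mvec K v = zero2 ->
  Cadd (Cmul (m11 K) (fst v)) (Cmul (m12 K) (snd v)) = C0 /\
  Cadd (Cmul (m21 K) (fst v)) (Cmul (m22 K) (snd v)) = C0.
Proof. unfold Mvec, zero2. intro H. split; [apply (f_equal fst) in H | apply (f_equal snd) in H]; exact H. Qed.

Lemma kernel_det_zero (K : M2) v : Mvec K v = zero2 -> v <> zero2 -> Cdet K = C0.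
Proof.
  intros H Hv. apply Mvec_eq0 in H. destruct H as [H1 H2].
  assert (E1 : Cmul (Cdet K) (fst v) = C0).
  { transitivity (Cadd (Cmul (m22 K) (Cadd (Cmul (m11 K) (fst v)) (Cmul (m12 K) (snd v))))
       (Cmul (-1,0) (Cmul (m12 K) (Cadd (Cmul (m21 K) (fst v)) (Cmul (m22 K) (snd v)))))).
    - unfold Cdet, Cmul, Cadd; cring.
    - rewrite H1, H2. unfold Cmul, Cadd, C0; cring. }
  assert (E2 : Cmul (Cdet K) (snd v) = C0).
  { transitivity (Cadd (Cmul (m11 K) (Cadd (Cmul (m21 K) (fst v)) (Cmul (m22 K) (snd v))))
       (Cmul (-1,0) (Cmul (m21 K) (Cadd (Cmul (m11 K) (fst v)) (Cmul (m12 K) (snd v)))))).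
    - unfold Cdet, Cmul, Cadd; cring.
    - rewrite H1, H2. unfold Cmul, Cadd, C0; cring. }
  apply Cmul_eq0 in E1; apply Cmul_eq0 in E2.
  destruct E1 as [E1|E1]; auto. destruct E2 as [E2|E2]; auto.
  destruct (neq_zero2 v Hv); contradiction.
Qed.

(* ... and conversely: (m12, -m11) or (m22, -m21) spans the kernel. *)
Lemma det_zero_kernel (K : M2) : Cdet K = C0 -> exists v, v <> zero2 /\ Mvec K v = zero2.
Proof.
  intro Hd. unfold Cdet in Hd.
  assert (Row2 : forall v, v = (m22 K, Cmul (-1,0) (m21 K)) ->
            Cadd (Cmul (m21 K) (fst v)) (Cmul (m22 K) (snd v)) = C0).
  { intros v ->. unfold Cmul, Cadd, C0; cring. }
  destruct (Ceq_dec (m11 K) C0) as [Ha|Ha]; [destruct (Ceq_dec (m12 K) C0) as [Hb|Hb]|].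
  - destruct (Ceq_dec (m21 K) C0) as [Hc|Hc]; [destruct (Ceq_dec (m22 K) C0) as [Hd'|Hd']|].
    + exists (C1, C0). split. apply nz_fst, C1_nz.
      unfold Mvec, zero2. rewrite Ha, Hb, Hc, Hd'. unfold C0, C1, Cmul, Cadd; cring.
    + exists (m22 K, Cmul (-1,0) (m21 K)). split. apply nz_fst; auto.
      apply C2_eq; [simpl; rewrite Ha, Hb; unfold C0, Cmul, Cadd; cring | apply Row2; auto].
    + exists (m22 K, Cmul (-1,0) (m21 K)). split. apply nz_snd, neg_nz; auto.
      apply C2_eq; [simpl; rewrite Ha, Hb; unfold C0, Cmul, Cadd; cring | apply Row2; auto].
  - exists (m12 K, Cmul (-1,0) (m11 K)). split. apply nz_fst; auto.
    apply C2_eq; simpl fst; simpl snd; [unfold Cmul, Cadd, C0; cring|].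
    transitivity (Cmul (-1,0) (Cadd (Cmul (m11 K) (m22 K)) (Cmul (-1, 0) (Cmul (m12 K) (m21 K))))).
    unfold Cmul, Cadd; cring. rewrite Hd. unfold Cmul, C0; cring.
  - exists (m12 K, Cmul (-1,0) (m11 K)). split. apply nz_snd, neg_nz; auto.
    apply C2_eq; simpl fst; simpl snd; [unfold Cmul, Cadd, C0; cring|].
    transitivity (Cmul (-1,0) (Cadd (Cmul (m11 K) (m22 K)) (Cmul (-1, 0) (Cmul (m12 K) (m21 K))))).
    unfold Cmul, Cadd; cring. rewrite Hd. unfold Cmul, C0; cring.
Qed.

Lemma kernel_1dim (K : M2) v w :
  (m11 K <> C0 \/ m12 K <> C0 \/ m21 K <> C0 \/ m22 K <> C0) ->
  Mvec K v = zero2 -> Mvec K w = zero2 -> Cdet2 v w = C0.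
Proof.
  intros Hnz Hv Hw. apply Mvec_eq0 in Hv; apply Mvec_eq0 in Hw.
  destruct Hv as [Hv1 Hv2]; destruct Hw as [Hw1 Hw2].
  assert (R1 : forall r1 r2, Cadd (Cmul r1 (fst v)) (Cmul r2 (snd v)) = C0 ->
     Cadd (Cmul r1 (fst w)) (Cmul r2 (snd w)) = C0 ->
     Cmul r1 (Cdet2 v w) = C0 /\ Cmul r2 (Cdet2 v w) = C0).
  { intros r1 r2 E1 E2. split.
    - transitivity (Cadd (Cmul (snd w) (Cadd (Cmul r1 (fst v)) (Cmul r2 (snd v))))
        (Cmul (-1,0) (Cmul (snd v) (Cadd (Cmul r1 (fst w)) (Cmul r2 (snd w)))))).
      unfold Cdet2, Cdet, cols, Cmul, Cadd; cring. rewrite E1, E2. unfold Cmul, Cadd, C0; cring.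
    - transitivity (Cadd (Cmul (fst v) (Cadd (Cmul r1 (fst w)) (Cmul r2 (snd w))))
        (Cmul (-1,0) (Cmul (fst w) (Cadd (Cmul r1 (fst v)) (Cmul r2 (snd v)))))).
      unfold Cdet2, Cdet, cols, Cmul, Cadd; cring. rewrite E1, E2. unfold Cmul, Cadd, C0; cring. }
  destruct (R1 _ _ Hv1 Hw1) as [Ea Eb]. destruct (R1 _ _ Hv2 Hw2) as [Ec Ed].
  destruct Hnz as [H|[H|[H|H]]];
  [apply Cmul_eq0 in Ea | apply Cmul_eq0 in Eb | apply Cmul_eq0 in Ec | apply Cmul_eq0 in Ed];
  intuition.
Qed.

Lemma vscal0 v : vscal C0 v = zero2.
Proof. unfold vscal, zero2, C0, Cmul; cring. Qed.
Lemma vadd0 v : vadd v zero2 = v.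
Proof. unfold vadd, zero2, C0, Cadd; cring. Qed.

Lemma lincomb_zeros k vs : lincomb (repeat C0 k) vs = zero2.
Proof.
  revert vs; induction k; intros vs; destruct vs; simpl; auto.
  rewrite IHk, vscal0, vadd0. auto.
Qed.

Lemma dep2 v w : Cdet2 v w = C0 ->
  exists x y, (x <> C0 \/ y <> C0) /\ vadd (vscal x v) (vscal y w) = zero2.
Proof.
  intro H. destruct (det_zero_kernel (cols v w) H) as [[x y] [Hxy E]].
  exists x, y. split; [apply (neq_zero2 (x, y) Hxy)|].
  rewrite <- E. unfold vadd, vscal, Mvec, cols, Cmul, Cadd; cring.
Qed.

Lemma not_indep2 v w rest : Cdet2 v w = C0 -> ~ lin_indep (v :: w :: rest).
Proof.
  intros H Hi. destruct (dep2 v w H) as [x [y [Hxy E]]].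
  specialize (Hi (x :: y :: repeat C0 (length rest))).
  simpl in Hi. rewrite repeat_length, lincomb_zeros, vadd0 in Hi.
  assert (Hf : Forall (fun c => c = C0) (x :: y :: repeat C0 (length rest))) by (apply Hi; auto).
  inversion Hf; subst. inversion H3; subst. destruct Hxy; auto.
Qed.

(* In C^2 any three vectors are dependent (Cramer's relation). *)
Lemma not_indep3 v w u rest : ~ lin_indep (v :: w :: u :: rest).
Proof.
  intro Hi. destruct (Ceq_dec (Cdet2 v w) C0) as [E|E].
  - apply (not_indep2 v w (u :: rest) E Hi).
  - set (cs := Cdet2 w u :: Cmul (-1,0) (Cdet2 v u) :: Cdet2 v w :: repeat C0 (length rest)).
    assert (Hf : Forall (fun c => c = C0) cs).
    { apply Hi. simpl. rewrite repeat_length. auto.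
      simpl. rewrite lincomb_zeros, vadd0.
      destruct v as [[a1 a2] [a3 a4]], w as [[b1 b2] [b3 b4]], u as [[c1 c2] [c3 c4]].
      unfold vadd, vscal, zero2, Cdet2, Cdet, cols, Cmul, Cadd, C0; simpl. cring. }
    inversion Hf; subst. inversion H2; subst. inversion H4; subst. contradiction.
Qed.

Lemma indep1 v : v <> zero2 -> lin_indep [v].
Proof.
  intros Hv cs Hl Hc. destruct cs as [|c [|]]; simpl in Hl; try lia.
  simpl in Hc. rewrite vadd0 in Hc. constructor; auto.
  assert (H1 : Cmul c (fst v) = C0) by (apply (f_equal fst) in Hc; exact Hc).
  assert (H2 : Cmul c (snd v) = C0) by (apply (f_equal snd) in Hc; exact Hc).
  apply Cmul_eq0 in H1; apply Cmul_eq0 in H2.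
  destruct H1; auto. destruct H2; auto. destruct (neq_zero2 v Hv); contradiction.
Qed.

Lemma indep_e12 : lin_indep [(C1, C0); (C0, C1)].
Proof.
  intros cs Hl Hc. destruct cs as [|c [|d [|]]]; simpl in Hl; try lia.
  simpl in Hc. rewrite vadd0 in Hc.
  assert (E1 : c = fst (vadd (vscal c (C1, C0)) (vscal d (C0, C1))))
    by (unfold vadd, vscal, Cadd, Cmul, C0, C1; cring).
  assert (E2 : d = snd (vadd (vscal c (C1, C0)) (vscal d (C0, C1))))
    by (unfold vadd, vscal, Cadd, Cmul, C0, C1; cring).
  rewrite Hc in E1, E2. simpl in E1, E2. subst. repeat constructor.
Qed.

Lemma geom_mult_unique M m1 m2 : geom_mult_1 M m1 -> geom_mult_1 M m2 -> m1 = m2.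
Proof.
  intros [[vs1 [L1 [F1 I1]]] H1] [[vs2 [L2 [F2 I2]]] H2].
  specialize (H1 vs2 F2 I2). specialize (H2 vs1 F1 I1). lia.
Qed.

Definition RsubId (Y : RMat) : RMat := mkRMat (r11 Y - 1) (r12 Y) (r21 Y) (r22 Y - 1).

Lemma fixed_vec_iff Y v : fixed_vec (embed Y) v <-> Mvec (embed (RsubId Y)) v = zero2.
Proof.
  unfold fixed_vec. destruct v as [[a b] [c d]]. destruct Y as [y1 y2 y3 y4].
  unfold Mvec, embed, RsubId, zero2, Cmul, Cadd, C0; simpl.
  split; intro H; injection H; intros; apply C2_eq; apply C_eq; simpl; field_simplify;
    field_simplify in H0; field_simplify in H1; field_simplify in H2; field_simplify in H3; lra.
Qed.

Lemma Cdet_embed X : Cdet (embed X) = (rdet X, 0).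
Proof. unfold Cdet, embed, rdet, Cmul, Cadd; apply C_eq; simpl; field. Qed.

(* For det Y = 1:  1 is an eigenvalue iff tr Y = 2, since det (Y - I) = 2 - tr Y. *)
Lemma eigenvalue_1_iff_trace Y : rdet Y = 1 -> (eigenvalue_1 (embed Y) <-> rtr Y = 2).
Proof.
  intro HY. assert (Hd : rdet (RsubId Y) = 2 - rtr Y) by (unfold rdet, RsubId, rtr in *; simpl; lra).
  split.
  - intros [v [Hv Hf]]. apply fixed_vec_iff in Hf. apply kernel_det_zero in Hf; auto.
    rewrite Cdet_embed in Hf. injection Hf; intros. lra.
  - intro Ht. destruct (det_zero_kernel (embed (RsubId Y))) as [v [Hv Hk]].
    + rewrite Cdet_embed. unfold C0. f_equal. lra.
    + exists v. split; auto. apply fixed_vec_iff; auto.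
Qed.

Lemma geom_mult_id : geom_mult_1 (embed RId) 2.
Proof.
  rewrite embed_id. split.
  - exists [(C1, C0); (C0, C1)]. split; auto. split; [|apply indep_e12].
    repeat constructor; unfold fixed_vec, Mvec, Id2, C1, C0, Cmul, Cadd; cring.
  - intros vs _ Hi. destruct vs as [|v [|w [|u rest]]]; simpl; try lia.
    exfalso. apply (not_indep3 v w u rest Hi).
Qed.

Lemma geom_mult_parabolic Y : rdet Y = 1 -> rtr Y = 2 -> Y <> RId -> geom_mult_1 (embed Y) 1.
Proof.
  intros Hd Ht Hne.
  assert (Hd' : Cdet (embed (RsubId Y)) = C0).
  { rewrite Cdet_embed. unfold C0. f_equal. unfold rdet, rtr, RsubId in *; simpl; lra. }
  split.
  - destruct (det_zero_kernel _ Hd') as [v [Hv Hk]]. exists [v]. split; auto. split.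
    + constructor; auto. apply fixed_vec_iff; auto.
    + apply indep1; auto.
  - intros vs Hf Hi. destruct vs as [|v [|w rest]]; simpl; try lia.
    exfalso. inversion Hf; subst. inversion H2; subst.
    apply fixed_vec_iff in H1. apply fixed_vec_iff in H3.
    apply (not_indep2 v w rest); auto.
    apply (kernel_1dim (embed (RsubId Y))); auto.
    destruct (Ceq_dec (m11 (embed (RsubId Y))) C0) as [E1|E1]; auto.
    destruct (Ceq_dec (m12 (embed (RsubId Y))) C0) as [E2|E2]; auto.
    exfalso. apply Hne. destruct Y as [y1 y2 y3 y4]. unfold embed, RsubId, C0, RId in *; simpl in *.
    injection E1; injection E2; intros. f_equal; lra.
Qed.

Definition sumL {T} (L : list T) (f : T -> R) : R := fold_right Rplus 0 (map f L).
Definition prodL {T} (L : list T) (f : T -> R) : R := fold_right Rmult 1 (map f L).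

Lemma sumL_app {T} (L1 L2 : list T) f : sumL (L1 ++ L2) f = sumL L1 f + sumL L2 f.
Proof. unfold sumL. rewrite map_app. induction L1; simpl; [lra|]. rewrite IHL1; lra. Qed.

Lemma sumL_ext_in {T} (L : list T) f g : (forall x, In x L -> f x = g x) -> sumL L f = sumL L g.
Proof. intros H. unfold sumL. f_equal. apply map_ext_in; auto. Qed.

Lemma sumL_lin4 {T} (L : list T) a1 a2 a3 a4 f1 f2 f3 f4 :
  sumL L (fun x => a1 * f1 x + a2 * f2 x + a3 * f3 x + a4 * f4 x) =
  a1 * sumL L f1 + a2 * sumL L f2 + a3 * sumL L f3 + a4 * sumL L f4.
Proof. induction L; unfold sumL in *; simpl; [ring|]. rewrite IHL. ring. Qed.

Lemma prodL_app {T} (L1 L2 : list T) f : prodL (L1 ++ L2) f = prodL L1 f * prodL L2 f.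
Proof. unfold prodL. rewrite map_app. induction L1; simpl; [ring|]. rewrite IHL1; ring. Qed.

Lemma prodL_zero {T} (L : list T) f : prodL L f = 0 <-> exists x, In x L /\ f x = 0.
Proof.
  induction L as [|a L IH]; unfold prodL in *; simpl.
  - split. lra. intros [x [[] _]].
  - split.
    + intro H. apply Rmult_integral in H. destruct H as [H|H]. exists a; auto.
      apply IH in H. destruct H as [x [Hx Hf]]. exists x; auto.
    + intros [x [[<-|Hx] Hf]]. rewrite Hf; ring.
      assert (fold_right Rmult 1 (map f L) = 0) by (apply IH; eauto). rewrite H; ring.
Qed.

Lemma sumL_sign_lists_snoc k (f : list bool -> R) :
  sumL (all_sign_lists (S k)) f =
  sumL (all_sign_lists k) (fun l => f (l ++ [true]) + f (l ++ [false])).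
Proof.
  revert f; induction k; intro f.
  - unfold sumL; simpl. ring.
  - change (all_sign_lists (S (S k))) with
      (map (cons true) (all_sign_lists (S k)) ++ map (cons false) (all_sign_lists (S k))).
    change (all_sign_lists (S k)) with
      (map (cons true) (all_sign_lists k) ++ map (cons false) (all_sign_lists k)) at 3.
    rewrite !sumL_app.
    assert (Hm : forall (g : list bool -> R) b L, sumL (map (cons b) L) g = sumL L (fun l => g (b :: l))).
    { intros g b L. unfold sumL. rewrite map_map. auto. }
    rewrite !Hm, (IHk (fun l => f (true :: l))), (IHk (fun l => f (false :: l))). auto.
Qed.

Lemma sign_lists_length k l : In l (all_sign_lists k) -> length l = k.
Proof.
  revert l; induction k; simpl; intros l H.
  - destruct H as [<-|[]]; auto.
  - apply in_app_or in H. destruct H as [H|H]; apply in_map_iff in H; destruct H as [l' [<- H]];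
    simpl; f_equal; auto.
Qed.

Lemma prod1n_S k f : prod1n (S k) f = prod1n k f * f (S k).
Proof.
  unfold prod1n. rewrite seq_S, map_app. simpl.
  generalize (map f (seq 1 k)). induction l; simpl; [ring|]. rewrite IHl; ring.
Qed.
Lemma sum1n_S k f : sum1n (S k) f = sum1n k f + f (S k).
Proof.
  unfold sum1n. rewrite seq_S, map_app. simpl.
  generalize (map f (seq 1 k)). induction l; simpl; [ring|]. rewrite IHl; ring.
Qed.
Lemma prod1n_ext k f g : (forall j, (1 <= j <= k)%nat -> f j = g j) -> prod1n k f = prod1n k g.
Proof.
  intros H. unfold prod1n. f_equal. apply map_ext_in. intros j Hj. apply in_seq in Hj. apply H; lia.
Qed.
Lemma sum1n_ext k f g : (forall j, (1 <= j <= k)%nat -> f j = g j) -> sum1n k f = sum1n k g.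
Proof.
  intros H. unfold sum1n. f_equal. apply map_ext_in. intros j Hj. apply in_seq in Hj. apply H; lia.
Qed.
Lemma prod1n_mul k f g : prod1n k f * prod1n k g = prod1n k (fun j => f j * g j).
Proof. induction k. unfold prod1n; simpl; ring. rewrite !prod1n_S, <- IHk. ring. Qed.
Lemma prod1n_zero k f j : (1 <= j <= k)%nat -> f j = 0 -> prod1n k f = 0.
Proof.
  induction k; intros Hj Hf. lia. rewrite prod1n_S. destruct (Nat.eq_dec j (S k)).
  - subst. rewrite Hf. ring.
  - rewrite (IHk ltac:(lia) Hf). ring.
Qed.

Lemma wrap_id n j : (1 <= j <= n)%nat -> wrap n j = j.
Proof.
  intros H. unfold wrap. replace (j + n - 1)%nat with ((j - 1) + 1 * n)%nat by lia.
  rewrite Nat.Div0.mod_add, Nat.mod_small by lia. lia.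
Qed.
Lemma wrap_Sn n : (1 <= n)%nat -> wrap n (S n) = 1%nat.
Proof.
  intros H. unfold wrap. replace (S n + n - 1)%nat with (0 + 2 * n)%nat by lia.
  rewrite Nat.Div0.mod_add, Nat.mod_small by lia. lia.
Qed.
Lemma wrap_0 n : (1 <= n)%nat -> wrap n 0 = n.
Proof.
  intros H. unfold wrap. replace (0 + n - 1)%nat with (n - 1)%nat by lia.
  rewrite Nat.mod_small by lia. lia.
Qed.
Lemma wrap_range n j : (1 <= n)%nat -> (1 <= wrap n j <= n)%nat.
Proof. intros H. unfold wrap. pose proof (Nat.mod_upper_bound (j + n - 1) n). lia. Qed.

Lemma al_id n alpha j : (1 <= j <= n)%nat -> al n alpha j = alpha j.
Proof. intros H. unfold al. rewrite wrap_id; auto. Qed.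
Lemma ll_id n ell j : (1 <= j <= n)%nat -> ll n ell j = ell j.
Proof. intros H. unfold ll. rewrite wrap_id; auto. Qed.

(** * Chains of vertex factors and the sign-path expansion of F^P *)

(* The product  vfac(c_1,l_1,s) ⋯ vfac(c_k,l_k,s)  of a list of (c, l) pairs,
   the first pair acting last. *)
Fixpoint chain (fs : list (R * R)) (s : R) : RMat :=
  match fs with [] => RId | f :: fs' => RMmul (vfac (fst f) (snd f) s) (chain fs' s) end.

Lemma det_chain fs s : rdet (chain fs s) = fold_right Rmult 1 (map (fun f => 1 - fst f ^ 2) fs).
Proof. induction fs; simpl. unfold rdet, RId; simpl; ring. rewrite rdet_mul, rdet_vfac, IHfs. auto. Qed.

Section SignPaths.
Variables (n : nat) (alpha ell : nat -> R).
Hypothesis Hn : (1 <= n)%nat.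

Local Notation al := (al n alpha).
Local Notation ll := (ll n ell).

Fixpoint poly_factors (k : nat) : list (R * R) :=
  match k with O => [] | S k' => (cth (al (S k')), ll (S k')) :: poly_factors k' end.
Definition Ppart (k : nat) (s : R) : RMat := chain (poly_factors k) s.

Fixpoint sin_inv_prod (k : nat) : R :=
  match k with O => 1 | S k' => / sth (al (S k')) * sin_inv_prod k' end.

Lemma Tpart_eq k s : Tpart n alpha ell k s = Mscal (sin_inv_prod k) (embed (Ppart k s)).
Proof.
  unfold Ppart. induction k; simpl.
  - rewrite embed_id, Mscal_1. reflexivity.
  - rewrite IHk, transfer_step. reflexivity.
Qed.

Lemma det_Ppart k s : rdet (Ppart k s) = prod1n k (fun j => 1 - cth (al j) ^ 2).
Proof.
  unfold Ppart. rewrite det_chain. induction k; [reflexivity|].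
  rewrite prod1n_S, <- IHk. simpl. ring.
Qed.

(* A sign path is a list l of the signs ζ_2, ζ_3, ...; ζ_1 = + is prepended.
   Along it, a change of sign at vertex j costs cos θ_j ([turn_weight]); the
   [phase] is Σ ℓ_j ζ_j. *)
Definition sign_at (l : list bool) (j : nat) : bool := nth (j - 1) (true :: l) true.
Definition sgnR (b : bool) : R := if b then 1 else -1.
Definition turn_weight (l : list bool) (j : nat) : R :=
  if Bool.eqb (sign_at l j) (sign_at l (S j)) then 1 else cth (al j).
Definition end_weight (l : list bool) (k : nat) (a : bool) : R :=
  if Bool.eqb (sign_at l k) a then 1 else cth (al k).
Definition phase (l : list bool) (k : nat) : R := sum1n k (fun j => ll j * sgnR (sign_at l j)).
Definition path_weight (l : list bool) (k : nat) (a : bool) : R :=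
  prod1n k (turn_weight l) * end_weight l (S k) a.

Lemma sign_at_snoc l b j : (1 <= j <= S (length l))%nat -> sign_at (l ++ [b]) j = sign_at l j.
Proof.
  intros H. unfold sign_at. destruct j as [|j]; [lia|]. replace (S j - 1)%nat with j by lia.
  destruct j; simpl; auto. rewrite app_nth1 by lia. auto.
Qed.
Lemma sign_at_last l b : sign_at (l ++ [b]) (S (S (length l))) = b.
Proof.
  unfold sign_at. replace (S (S (length l)) - 1)%nat with (S (length l)) by lia. simpl.
  rewrite app_nth2 by lia. rewrite Nat.sub_diag. auto.
Qed.

Lemma snoc_term l b a (g : R -> R) s :
  path_weight (l ++ [b]) (S (length l)) a * g (phase (l ++ [b]) (S (S (length l))) * s) =
  path_weight l (length l) b * (if Bool.eqb b a then 1 else cth (al (S (S (length l))))) *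
  g (phase l (S (length l)) * s + sgnR b * (ll (S (S (length l))) * s)).
Proof.
  assert (Hw : path_weight (l ++ [b]) (S (length l)) a =
    path_weight l (length l) b * (if Bool.eqb b a then 1 else cth (al (S (S (length l)))))).
  { unfold path_weight, end_weight. rewrite prod1n_S, sign_at_last.
    rewrite (prod1n_ext _ (turn_weight (l ++ [b])) (turn_weight l)).
    2:{ intros j Hj. unfold turn_weight. rewrite !sign_at_snoc by lia. auto. }
    unfold turn_weight at 2. rewrite sign_at_last, sign_at_snoc by lia. ring. }
  assert (Hp : phase (l ++ [b]) (S (S (length l))) =
               phase l (S (length l)) + ll (S (S (length l))) * sgnR b).
  { unfold phase. rewrite sum1n_S, sign_at_last. f_equal.
    apply sum1n_ext. intros j Hj. rewrite sign_at_snoc by lia. auto. }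
  rewrite Hw, Hp. f_equal. f_equal. ring.
Qed.

Lemma cos_sgn b p : cos (sgnR b * p) = cos p.
Proof. destruct b; simpl; [rewrite Rmult_1_l | replace (-1 * p) with (- p) by ring; rewrite cos_neg]; auto. Qed.
Lemma sin_sgn b p : sin (sgnR b * p) = sgnR b * sin p.
Proof. destruct b; simpl; [rewrite !Rmult_1_l | replace (-1 * p) with (- p) by ring; rewrite sin_neg]; ring. Qed.

Lemma embed_vfac_11 c l s : m11 (embed (vfac c l s)) = (cos (l * s), sin (l * s)).
Proof. unfold embed, vfac, RMmul, diag_pm, rot; simpl. apply C_eq; simpl; field. Qed.
Lemma embed_vfac_12 c l s : m12 (embed (vfac c l s)) = (- c * sin (l * s), - c * cos (l * s)).
Proof. unfold embed, vfac, RMmul, diag_pm, rot; simpl. apply C_eq; simpl; field. Qed.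
Lemma embed_vfac_21 c l s : m21 (embed (vfac c l s)) = (- c * sin (l * s), c * cos (l * s)).
Proof. unfold embed, vfac, RMmul, diag_pm, rot; simpl. apply C_eq; simpl; field. Qed.
Lemma embed_vfac_22 c l s : m22 (embed (vfac c l s)) = (cos (l * s), - sin (l * s)).
Proof. unfold embed, vfac, RMmul, diag_pm, rot; simpl. apply C_eq; simpl; field. Qed.

(* The first column of embed P_{k+1}(s), summed over the sign paths. *)
Definition col_sums (k : nat) (s : R) : C * C :=
  ((sumL (all_sign_lists k) (fun l => path_weight l k true * cos (phase l (S k) * s)),
    sumL (all_sign_lists k) (fun l => path_weight l k true * sin (phase l (S k) * s))),
   (- sumL (all_sign_lists k) (fun l => path_weight l k false * sin (phase l (S k) * s)),
    sumL (all_sign_lists k) (fun l => path_weight l k false * cos (phase l (S k) * s)))).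

Ltac path_terms Hl c p :=
  apply sumL_ext_in; intros l Hin; unfold c, p; rewrite <- (Hl l Hin), !snoc_term, (Hl l Hin);
  rewrite ?cos_plus, ?sin_plus, !cos_sgn, !sin_sgn; simpl; ring.

Lemma path_expansion_step k s :
  (m11 (embed (Ppart (S k) s)), m21 (embed (Ppart (S k) s))) = col_sums k s ->
  (m11 (embed (Ppart (S (S k)) s)), m21 (embed (Ppart (S (S k)) s))) = col_sums (S k) s.
Proof.
  intros IH. unfold col_sums in IH.
  pose proof (f_equal fst IH) as H1. pose proof (f_equal snd IH) as H2. cbn [fst snd] in H1, H2.
  unfold Ppart. change (chain (poly_factors (S (S k))) s) with
    (RMmul (vfac (cth (al (S (S k)))) (ll (S (S k))) s) (Ppart (S k) s)).
  rewrite <- embed_mul. unfold col_sums. rewrite !sumL_sign_lists_snoc.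
  assert (Hl : forall l, In l (all_sign_lists k) -> length l = k) by apply sign_lists_length.
  cbn [Mmul m11 m21]. rewrite H1, H2, embed_vfac_11, embed_vfac_12, embed_vfac_21, embed_vfac_22.
  set (c := cth (al (S (S k)))). set (p := ll (S (S k)) * s).
  set (A := sumL (all_sign_lists k) (fun l => path_weight l k true * cos (phase l (S k) * s))).
  set (B := sumL (all_sign_lists k) (fun l => path_weight l k true * sin (phase l (S k) * s))).
  set (D := sumL (all_sign_lists k) (fun l => path_weight l k false * sin (phase l (S k) * s))).
  set (E := sumL (all_sign_lists k) (fun l => path_weight l k false * cos (phase l (S k) * s))).
  f_equal; apply C_eq; simpl fst; simpl snd.
  - transitivity (sumL (all_sign_lists k) (fun l =>
       cos p * (path_weight l k true * cos (phase l (S k) * s)) + (- sin p) * (path_weight l k true * sin (phase l (S k) * s))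
       + (c * sin p) * (path_weight l k false * sin (phase l (S k) * s)) + (c * cos p) * (path_weight l k false * cos (phase l (S k) * s)))).
    + rewrite sumL_lin4. unfold A, B, D, E, c, p. ring.
    + path_terms Hl c p.
  - transitivity (sumL (all_sign_lists k) (fun l =>
       sin p * (path_weight l k true * cos (phase l (S k) * s)) + cos p * (path_weight l k true * sin (phase l (S k) * s))
       + (c * cos p) * (path_weight l k false * sin (phase l (S k) * s)) + (- c * sin p) * (path_weight l k false * cos (phase l (S k) * s)))).
    + rewrite sumL_lin4. unfold A, B, D, E, c, p. ring.
    + path_terms Hl c p.
  - transitivity (- sumL (all_sign_lists k) (fun l =>
       (c * sin p) * (path_weight l k true * cos (phase l (S k) * s)) + (c * cos p) * (path_weight l k true * sin (phase l (S k) * s))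
       + cos p * (path_weight l k false * sin (phase l (S k) * s)) + (- sin p) * (path_weight l k false * cos (phase l (S k) * s)))).
    + rewrite sumL_lin4. unfold A, B, D, E, c, p. ring.
    + f_equal. path_terms Hl c p.
  - transitivity (sumL (all_sign_lists k) (fun l =>
       (c * cos p) * (path_weight l k true * cos (phase l (S k) * s)) + (- c * sin p) * (path_weight l k true * sin (phase l (S k) * s))
       + sin p * (path_weight l k false * sin (phase l (S k) * s)) + cos p * (path_weight l k false * cos (phase l (S k) * s)))).
    + rewrite sumL_lin4. unfold A, B, D, E, c, p. ring.
    + path_terms Hl c p.
Qed.

Lemma path_expansion k s :
  (m11 (embed (Ppart (S k) s)), m21 (embed (Ppart (S k) s))) = col_sums k s.
Proof.
  induction k.
  - unfold Ppart. cbn [poly_factors chain fst snd]. rewrite RMmul_1_r, embed_vfac_11, embed_vfac_21.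
    unfold col_sums, sumL, path_weight, end_weight, phase, sign_at, prod1n, sum1n; simpl.
    replace ((ll 1 * 1 + 0) * s) with (ll 1 * s) by ring.
    f_equal; apply C_eq; simpl; ring.
  - apply path_expansion_step; auto.
Qed.

Lemma zb_eq l j : (1 <= j <= n)%nat -> zb n l j = sign_at l j.
Proof.
  intros H. unfold zb, sign_at. rewrite wrap_id by auto.
  destruct j as [|[|j]]; try lia; simpl; auto. rewrite Nat.sub_0_r; auto.
Qed.
Lemma zb_Sn l : zb n l (S n) = true.
Proof. unfold zb. rewrite wrap_Sn by auto. simpl. auto. Qed.

Lemma FP_trace s : FP n alpha ell s = rtr (Ppart n s) / 2 - prod1n n (fun j => sin (theta (alpha j))).
Proof.
  pose (m := (n - 1)%nat). assert (En : n = S m) by (unfold m; lia).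
  assert (Pn : forall g, prod1n n g = prod1n m g * g n) by (intros; rewrite En, prod1n_S; auto).
  assert (Hre : fst (m11 (embed (Ppart n s))) = rtr (Ppart n s) / 2) by (unfold embed, rtr; simpl; auto).
  rewrite <- Hre. replace (Ppart n s) with (Ppart (S m) s) by (rewrite <- En; reflexivity).
  assert (H1 := f_equal fst (path_expansion m s)). unfold col_sums in H1. cbn [fst] in H1.
  rewrite H1. cbn [fst].
  unfold FP. replace (n - 1)%nat with m by lia. f_equal. apply sumL_ext_in. intros l Hl. f_equal.
  - unfold pzeta, path_weight. rewrite Pn, <- En. f_equal.
    + apply prod1n_ext. intros j Hj. unfold in_ch, turn_weight.
      rewrite !zb_eq, al_id by lia. destruct (Bool.eqb (sign_at l j) (sign_at l (S j))); auto.
    + unfold in_ch, end_weight. rewrite zb_Sn, zb_eq, al_id by lia.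
      destruct (Bool.eqb (sign_at l n) true); auto.
  - f_equal. unfold elldotzeta, phase. rewrite <- En. f_equal. apply sum1n_ext. intros j Hj.
    rewrite ll_id by lia. unfold zeta, sgnR. rewrite zb_eq by lia. auto.
Qed.

End SignPaths.

(** * Derivatives of chains and the Wronskian *)

Definition rot' (p : R) : RMat := mkRMat (- sin p) (- cos p) (cos p) (- sin p).
Definition vfac' (c l s : R) : RMat := RMscal l (RMmul (diag_pm c) (rot' (l * s))).
Definition vfac'' (c l s : R) : RMat := RMscal (- (l * l)) (vfac c l s).

Fixpoint chain' (fs : list (R * R)) (s : R) : RMat :=
  match fs with
  | [] => RZero
  | f :: fs' => RMadd (RMmul (vfac' (fst f) (snd f) s) (chain fs' s))
                      (RMmul (vfac (fst f) (snd f) s) (chain' fs' s))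
  end.
Fixpoint chain'' (fs : list (R * R)) (s : R) : RMat :=
  match fs with
  | [] => RZero
  | f :: fs' => RMadd (RMadd (RMmul (vfac'' (fst f) (snd f) s) (chain fs' s))
                             (RMscal 2 (RMmul (vfac' (fst f) (snd f) s) (chain' fs' s))))
                      (RMmul (vfac (fst f) (snd f) s) (chain'' fs' s))
  end.

Definition mat_deriv (A A' : R -> RMat) : Prop :=
  forall y, derivable_pt_lim (fun z => r11 (A z)) y (r11 (A' y)) /\
            derivable_pt_lim (fun z => r12 (A z)) y (r12 (A' y)) /\
            derivable_pt_lim (fun z => r21 (A z)) y (r21 (A' y)) /\
            derivable_pt_lim (fun z => r22 (A z)) y (r22 (A' y)).

Lemma mat_deriv_mul A A' B B' : mat_deriv A A' -> mat_deriv B B' ->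
  mat_deriv (fun z => RMmul (A z) (B z)) (fun z => RMadd (RMmul (A' z) (B z)) (RMmul (A z) (B' z))).
Proof.
  intros HA HB y. destruct (HA y) as [a1 [a2 [a3 a4]]]. destruct (HB y) as [b1 [b2 [b3 b4]]].
  unfold RMmul, RMadd; simpl.
  repeat split; (eapply dpl_eq; [|apply dpl_plus; apply dpl_mult; eauto]); cbv beta; ring.
Qed.

Lemma mat_deriv_add A A' B B' : mat_deriv A A' -> mat_deriv B B' ->
  mat_deriv (fun z => RMadd (A z) (B z)) (fun z => RMadd (A' z) (B' z)).
Proof.
  intros HA HB y. destruct (HA y) as [a1 [a2 [a3 a4]]]. destruct (HB y) as [b1 [b2 [b3 b4]]].
  unfold RMadd; simpl. repeat split; apply dpl_plus; auto.
Qed.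

Lemma mat_deriv_const A : mat_deriv (fun _ => A) (fun _ => RZero).
Proof. intros y. unfold RZero; simpl. repeat split; apply dpl_const. Qed.

Lemma mat_deriv_ext' A A' B' : (forall z, A' z = B' z) -> mat_deriv A A' -> mat_deriv A B'.
Proof. intros E H y. rewrite <- E. apply H. Qed.

Lemma dpl_kcos k l y : derivable_pt_lim (fun z => k * cos (l * z)) y (k * (- (l * sin (l * y)))).
Proof. apply dpl_scal, dpl_cosl. Qed.
Lemma dpl_ksin k l y : derivable_pt_lim (fun z => k * sin (l * z)) y (k * (l * cos (l * y))).
Proof. apply dpl_scal, dpl_sinl. Qed.

Lemma mat_deriv_vfac c l : mat_deriv (vfac c l) (vfac' c l).
Proof.
  intros y. unfold vfac, vfac', RMmul, RMscal, diag_pm, rot, rot'; simpl. repeat split.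
  - apply (dpl_ext (fun z => (1 + c) * cos (l * z))). intros; ring.
    eapply dpl_eq; [|apply dpl_kcos]. ring.
  - apply (dpl_ext (fun z => (-(1 + c)) * sin (l * z))). intros; ring.
    eapply dpl_eq; [|apply dpl_ksin]. ring.
  - apply (dpl_ext (fun z => (1 - c) * sin (l * z))). intros; ring.
    eapply dpl_eq; [|apply dpl_ksin]. ring.
  - apply (dpl_ext (fun z => (1 - c) * cos (l * z))). intros; ring.
    eapply dpl_eq; [|apply dpl_kcos]. ring.
Qed.

Lemma mat_deriv_vfac' c l : mat_deriv (vfac' c l) (vfac'' c l).
Proof.
  intros y. unfold vfac, vfac', vfac'', RMmul, RMscal, diag_pm, rot, rot'; simpl. repeat split.
  - apply (dpl_ext (fun z => (- l * (1 + c)) * sin (l * z))). intros; ring.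
    eapply dpl_eq; [|apply dpl_ksin]. ring.
  - apply (dpl_ext (fun z => (- l * (1 + c)) * cos (l * z))). intros; ring.
    eapply dpl_eq; [|apply dpl_kcos]. ring.
  - apply (dpl_ext (fun z => (l * (1 - c)) * cos (l * z))). intros; ring.
    eapply dpl_eq; [|apply dpl_kcos]. ring.
  - apply (dpl_ext (fun z => (- l * (1 - c)) * sin (l * z))). intros; ring.
    eapply dpl_eq; [|apply dpl_ksin]. ring.
Qed.

Lemma mat_deriv_chain fs : mat_deriv (chain fs) (chain' fs).
Proof.
  induction fs as [|f fs IH]; simpl.
  - apply mat_deriv_const.
  - apply (mat_deriv_mul (vfac (fst f) (snd f)) (vfac' (fst f) (snd f)) (chain fs) (chain' fs)); auto.
    apply mat_deriv_vfac.
Qed.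

Lemma mat_deriv_chain' fs : mat_deriv (chain' fs) (chain'' fs).
Proof.
  induction fs as [|f fs IH]; simpl.
  - apply mat_deriv_const.
  - eapply mat_deriv_ext'.
    2:{ apply mat_deriv_add.
        - apply (mat_deriv_mul (vfac' (fst f) (snd f)) (vfac'' (fst f) (snd f)) (chain fs) (chain' fs)).
          apply mat_deriv_vfac'. apply mat_deriv_chain.
        - apply (mat_deriv_mul (vfac (fst f) (snd f)) (vfac' (fst f) (snd f)) (chain' fs) (chain'' fs)).
          apply mat_deriv_vfac. auto. }
    intros z. apply RMat_eq; unfold RMadd, RMmul, RMscal; simpl; ring.
Qed.

Definition mat_smooth (A : R -> RMat) : Prop :=
  smooth (fun z => r11 (A z)) /\ smooth (fun z => r12 (A z)) /\
  smooth (fun z => r21 (A z)) /\ smooth (fun z => r22 (A z)).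

Lemma mat_smooth_mul A B : mat_smooth A -> mat_smooth B -> mat_smooth (fun z => RMmul (A z) (B z)).
Proof.
  intros [a1 [a2 [a3 a4]]] [b1 [b2 [b3 b4]]]. unfold RMmul; simpl.
  repeat split; apply smooth_plus; apply smooth_mult; auto.
Qed.

Lemma smooth_kcos k l : smooth (fun z => k * cos (l * z)).
Proof. apply smooth_mult. apply smooth_const. apply smooth_cos. Qed.
Lemma smooth_ksin k l : smooth (fun z => k * sin (l * z)).
Proof. apply smooth_mult. apply smooth_const. apply smooth_sin. Qed.

Lemma mat_smooth_vfac c l : mat_smooth (vfac c l).
Proof.
  unfold vfac, RMmul, diag_pm, rot; simpl. repeat split.
  - apply (smooth_ext (fun z => (1 + c) * cos (l * z))). intros; simpl; ring. apply smooth_kcos.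
  - apply (smooth_ext (fun z => (-(1 + c)) * sin (l * z))). intros; simpl; ring. apply smooth_ksin.
  - apply (smooth_ext (fun z => (1 - c) * sin (l * z))). intros; simpl; ring. apply smooth_ksin.
  - apply (smooth_ext (fun z => (1 - c) * cos (l * z))). intros; simpl; ring. apply smooth_kcos.
Qed.

Lemma mat_smooth_chain fs : mat_smooth (chain fs).
Proof.
  induction fs as [|f fs IH]; simpl.
  - unfold RId; simpl. repeat split; apply smooth_const.
  - apply (mat_smooth_mul (vfac (fst f) (snd f)) (chain fs)); auto. apply mat_smooth_vfac.
Qed.

Lemma smooth_tr fs K : smooth (fun z => rtr (chain fs z) / 2 - K).
Proof.
  destruct (mat_smooth_chain fs) as [a1 [a2 [a3 a4]]]. unfold rtr.
  apply (smooth_ext (fun z => (/2) * (r11 (chain fs z) + r22 (chain fs z)) + (- K))). intros; unfold Rdiv; ring.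
  apply smooth_plus. apply smooth_mult. apply smooth_const. apply smooth_plus; auto. apply smooth_const.
Qed.

Lemma dpl_tr A A' K y : mat_deriv A A' ->
  derivable_pt_lim (fun z => rtr (A z) / 2 - K) y (rtr (A' y) / 2).
Proof.
  intros H. destruct (H y) as [a1 [a2 [a3 a4]]]. unfold rtr.
  apply (dpl_ext (fun z => (/2) * (r11 (A z) + r22 (A z)) - K)). intros; unfold Rdiv; ring.
  eapply dpl_eq; [|apply dpl_minus; [apply dpl_scal, dpl_plus; eauto|apply dpl_const]].
  unfold Rdiv; ring.
Qed.

Lemma smooth_entry b b' fs : smooth (fun y => 2 * entry b b' (chain fs y)).
Proof.
  destruct (mat_smooth_chain fs) as [a1 [a2 [a3 a4]]]. apply smooth_mult. apply smooth_const.
  destruct b, b'; simpl; auto.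
Qed.
Lemma dpl_entry b b' fs y :
  derivable_pt_lim (fun z => 2 * entry b b' (chain fs z)) y (2 * entry b b' (chain' fs y)).
Proof. destruct (mat_deriv_chain fs y) as [a1 [a2 [a3 a4]]]. destruct b, b'; apply dpl_scal; auto. Qed.

(* The Wronskian  w(s) = u(s) ∧ u'(s)  of u(s) = chain fs s · u0.  For an
   admissible chain (|c| < 1, l > 0 at every factor) it is positive: each
   factor contributes l (1 - c²) |·|² > 0 and the determinants stay positive. *)
Definition wedge (u v : R * R) : R := fst u * snd v - snd u * fst v.
Definition mvec (A : RMat) (u : R * R) : R * R :=
  (r11 A * fst u + r12 A * snd u, r21 A * fst u + r22 A * snd u).
Definition admissible (fs : list (R * R)) : Prop := Forall (fun f => fst f ^ 2 < 1 /\ 0 < snd f) fs.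

Lemma wedge_mul A u v : wedge (mvec A u) (mvec A v) = rdet A * wedge u v.
Proof. unfold wedge, mvec, rdet; simpl; ring. Qed.
Lemma mvec_mul A B u : mvec (RMmul A B) u = mvec A (mvec B u).
Proof. unfold mvec, RMmul; simpl; f_equal; ring. Qed.
Lemma mvec_add A B u :
  mvec (RMadd A B) u = (fst (mvec A u) + fst (mvec B u), snd (mvec A u) + snd (mvec B u)).
Proof. unfold mvec, RMadd; simpl; f_equal; ring. Qed.
Lemma wedge_add u v w : wedge u (fst v + fst w, snd v + snd w) = wedge u v + wedge u w.
Proof. unfold wedge; simpl; ring. Qed.

Lemma det_chain_pos fs s : admissible fs -> 0 < rdet (chain fs s).
Proof.
  intros H. rewrite det_chain. induction H; simpl. lra.
  destruct H. apply Rmult_lt_0_compat; auto. lra.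
Qed.

Lemma vfac_wronskian c l s v :
  wedge (mvec (vfac c l s) v) (mvec (vfac' c l s) v) = l * (1 - c ^ 2) * (fst v ^ 2 + snd v ^ 2).
Proof.
  transitivity (l * (1 - c ^ 2) * (fst v ^ 2 + snd v ^ 2) * (sin (l * s) ^ 2 + cos (l * s) ^ 2)).
  - unfold wedge, mvec, vfac, vfac', RMmul, RMscal, diag_pm, rot, rot'; simpl. ring.
  - replace (sin (l*s)^2 + cos (l*s)^2) with 1
      by (pose proof (sin2_cos2 (l*s)); unfold Rsqr in H; nra). ring.
Qed.

Lemma norm_pos (v : R * R) : v <> (0, 0) -> 0 < fst v ^ 2 + snd v ^ 2.
Proof.
  destruct v as [a b]; simpl; intro H.
  destruct (Req_EM_T a 0); destruct (Req_EM_T b 0); subst; try (exfalso; apply H; reflexivity); nra.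
Qed.

Lemma mvec_nonzero A u : 0 < rdet A -> u <> (0,0) -> mvec A u <> (0,0).
Proof.
  intros Hd Hu E. apply Hu. destruct u as [a b]. unfold mvec, rdet in *; simpl in *.
  injection E; intros E2 E1.
  assert (Ha : rdet A * a = 0) by (unfold rdet; replace (_ * a) with
    (r22 A * (r11 A * a + r12 A * b) - r12 A * (r21 A * a + r22 A * b)) by ring; rewrite E1, E2; ring).
  assert (Hb : rdet A * b = 0) by (unfold rdet; replace (_ * b) with
    (r11 A * (r21 A * a + r22 A * b) - r21 A * (r11 A * a + r12 A * b)) by ring; rewrite E1, E2; ring).
  unfold rdet in *. apply Rmult_integral in Ha; apply Rmult_integral in Hb.
  destruct Ha; [lra|]; destruct Hb; [lra|]. subst; auto.
Qed.

Lemma wronskian_cons f fs s u :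
  wedge (mvec (chain (f :: fs) s) u) (mvec (chain' (f :: fs) s) u) =
  snd f * (1 - fst f ^ 2) * (fst (mvec (chain fs s) u) ^ 2 + snd (mvec (chain fs s) u) ^ 2) +
  (1 - fst f ^ 2) * wedge (mvec (chain fs s) u) (mvec (chain' fs s) u).
Proof.
  simpl. rewrite !mvec_mul, mvec_add, wedge_add, !mvec_mul, wedge_mul, vfac_wronskian, rdet_vfac.
  reflexivity.
Qed.

Lemma wronskian_nonneg fs s u : admissible fs ->
  0 <= wedge (mvec (chain fs s) u) (mvec (chain' fs s) u).
Proof.
  intros H. induction H as [|f fs [Hc Hl] Hfs IH].
  - unfold wedge, mvec, RZero, RId; simpl. lra.
  - rewrite wronskian_cons.
    assert (0 <= fst (mvec (chain fs s) u) ^ 2 + snd (mvec (chain fs s) u) ^ 2) by nra.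
    apply Rplus_le_le_0_compat; apply Rmult_le_pos; nra.
Qed.

Lemma wronskian_pos fs s u : admissible fs -> fs <> [] -> u <> (0,0) ->
  0 < wedge (mvec (chain fs s) u) (mvec (chain' fs s) u).
Proof.
  intros H Hne Hu. destruct fs as [|f fs]; [contradiction|].
  inversion H as [|? ? [Hc Hl] Hfs]; subst. rewrite wronskian_cons.
  pose proof (norm_pos _ (mvec_nonzero _ _ (det_chain_pos fs s Hfs) Hu)).
  pose proof (wronskian_nonneg fs s u Hfs).
  apply Rplus_lt_le_0_compat; [apply Rmult_lt_0_compat|apply Rmult_le_pos]; nra.
Qed.

Definition det_d1 (A A' : RMat) : R :=
  r11 A' * r22 A + r11 A * r22 A' - r12 A' * r21 A - r12 A * r21 A'.
Definition det_d2 (A A' A'' : RMat) : R :=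
  r11 A'' * r22 A + 2 * r11 A' * r22 A' + r11 A * r22 A'' -
  (r12 A'' * r21 A + 2 * r12 A' * r21 A' + r12 A * r21 A'').

Lemma const_det_derivs (A A' A'' : R -> RMat) K :
  mat_deriv A A' -> mat_deriv A' A'' -> (forall y, rdet (A y) = K) ->
  forall y, det_d1 (A y) (A' y) = 0 /\ det_d2 (A y) (A' y) (A'' y) = 0.
Proof.
  intros H1 H2 HK.
  assert (D1 : forall y, det_d1 (A y) (A' y) = 0).
  { intros y. destruct (H1 y) as [a1 [a2 [a3 a4]]].
    apply (uniqueness_limite (fun z => rdet (A z)) y).
    - unfold rdet. eapply dpl_eq; [|apply dpl_minus; apply dpl_mult; eauto].
      unfold det_d1; cbv beta; ring.
    - apply (dpl_ext (fun _ => K)). intros; rewrite HK; auto. apply dpl_const. }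
  intros y. split; auto.
  destruct (H1 y) as [a1 [a2 [a3 a4]]]. destruct (H2 y) as [b1 [b2 [b3 b4]]].
  apply (uniqueness_limite (fun z => det_d1 (A z) (A' z)) y).
  - unfold det_d1. eapply dpl_eq.
    2:{ apply dpl_minus. apply dpl_minus. apply dpl_plus.
        all: apply dpl_mult; eauto. }
    unfold det_d2; cbv beta; ring.
  - apply (dpl_ext (fun _ => 0)). intros; rewrite D1; auto. apply dpl_const.
Qed.

(* At a zero of tr P - 2s where det P = s² but P ≠ s I (a parabolic point),
   positivity of the Wronskian forces tr P' ≠ 0: the zero is simple. *)
Lemma trace_deriv_nonzero (P Q : RMat) s : s <> 0 -> rtr P = 2 * s -> rdet P = s * s ->
  P <> RMscal s RId -> det_d1 P Q = 0 ->
  (forall u, u <> (0,0) -> 0 < wedge (mvec P u) (mvec Q u)) -> rtr Q <> 0.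
Proof.
  destruct P as [p11 p12 p21 p22], Q as [q11 q12 q21 q22].
  unfold rtr, rdet, det_d1, RMscal, RId, wedge, mvec; simpl. intros Hs HT HD HP D1 Hpos TQ.
  assert (E22 : p22 = 2 * s - p11) by lra. subst p22.
  destruct (ClassicalDescription.excluded_middle_informative (p11 - s = 0 /\ p12 = 0))
    as [[Ha Hb]|Hab].
  - (* P = s I + p21 E21 with p21 ≠ 0: test on u = (0, 1) *)
    assert (Hc : p21 <> 0) by (intro Hc; apply HP; f_equal; lra).
    assert (Hq : p21 * q12 = 0) by (replace p11 with s in D1 by lra; subst p12; nra).
    apply Rmult_integral in Hq. destruct Hq as [Hq|Hq]; [contradiction|]. subst q12.
    assert (H0 : (0:R, 1:R) <> (0, 0)) by (intro E; injection E; lra).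
    specialize (Hpos (0, 1) H0). simpl in Hpos. nra.
  - (* test on u = (p12, s - p11), an eigenvector direction of P *)
    set (a := p11 - s) in *. set (b := p12) in *. set (c := p21) in *.
    assert (H0 : (b, - a) <> (0, 0))
      by (intro E; injection E; intros; apply Hab; split; lra).
    specialize (Hpos (b, - a) H0). simpl in Hpos.
    assert (EV : forall D1e TQe Dtl,
      D1e = q11 * (2 * s - p11) + p11 * q22 - q12 * c - b * q21 ->
      TQe = q11 + q22 -> Dtl = p11 * (2 * s - p11) - b * c ->
      (p11 * b + b * - a) * (q21 * b + q22 * - a) - (c * b + (2 * s - p11) * - a) * (q11 * b + q12 * - a) =
      s * (- b * D1e + b * s * TQe) + (Dtl - s * s) * (s * q12 + q11 * b - q12 * a)).
    { intros D1e TQe Dtl -> -> ->. unfold a. ring. }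
    rewrite (EV _ _ _ eq_refl eq_refl eq_refl), D1, TQ, HD in Hpos. lra.
Qed.

Lemma scalar_trace_derivs (Q Q2 : RMat) s : s <> 0 ->
  det_d1 (RMscal s RId) Q = 0 -> det_d2 (RMscal s RId) Q Q2 = 0 ->
  (forall u, u <> (0,0) -> 0 < wedge (mvec (RMscal s RId) u) (mvec Q u)) ->
  rtr Q = 0 /\ rtr Q2 <> 0.
Proof.
  destruct Q as [q11 q12 q21 q22], Q2 as [w11 w12 w21 w22].
  unfold rtr, det_d1, det_d2, RMscal, RId, wedge, mvec; simpl. intros Hs D1 D2 Hpos.
  assert (TQ : q11 + q22 = 0).
  { apply (Rmult_eq_reg_l s); auto. rewrite Rmult_0_r, <- D1. ring. }
  split; auto.
  assert (H1' : 0 < s * q21).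
  { assert (H0 : (1:R, 0:R) <> (0, 0)) by (intro E; injection E; lra).
    specialize (Hpos (1, 0) H0). simpl in Hpos. nra. }
  assert (Hq : q21 <> 0) by (intro; subst; nra).
  assert (H0 : (q11, q21) <> (0, 0)) by (intro E; injection E; intros; contradiction).
  assert (H2 := Hpos (q11, q21) H0). simpl in H2.
  assert (E2 : (s * 1 * q11 + s * 0 * q21) * (q21 * q11 + q22 * q21) -
               (s * 0 * q11 + s * 1 * q21) * (q11 * q11 + q12 * q21)
               = (s * q21) * (q11 * q22 - q12 * q21)) by ring.
  rewrite E2 in H2.
  assert (Hdet : 0 < q11 * q22 - q12 * q21).
  { destruct (Rle_or_lt (q11 * q22 - q12 * q21) 0); auto. exfalso.
    assert ((s * q21) * (q11 * q22 - q12 * q21) <= 0) by nra. lra. }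
  intro HW.
  assert (E3 : s * (w11 + w22) = - 2 * (q11 * q22 - q12 * q21)).
  { replace (s * (w11 + w22)) with ((w11 * (s * 1) + 2 * q11 * q22 + s * 1 * w22 -
      (w12 * (s * 0) + 2 * q12 * q21 + s * 0 * w21)) - 2 * (q11 * q22 - q12 * q21)) by ring.
    rewrite D2. ring. }
  rewrite HW, Rmult_0_r in E3. lra.
Qed.

(** * Exceptional angles *)

Lemma theta_exc k : (1 <= k)%nat -> theta (PI / (2 * INR k)) = INR k * PI.
Proof.
  intros Hk. unfold theta. assert (0 < INR k) by (apply lt_0_INR; lia).
  pose proof PI_RGT_0. field. split; lra.
Qed.

Lemma cos_kPI k : (Nat.Even k -> cos (INR k * PI) = 1) /\ (Nat.Odd k -> cos (INR k * PI) = -1).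
Proof.
  induction k.
  - simpl. rewrite Rmult_0_l, cos_0. split; auto. intros [m Hm]; lia.
  - rewrite S_INR. replace ((INR k + 1) * PI) with (INR k * PI + PI) by ring. rewrite neg_cos.
    destruct IHk as [H1 H2]. split; intro H.
    + apply Nat.Even_succ in H. rewrite H2; auto; ring.
    + apply Nat.Odd_succ in H. rewrite H1; auto; ring.
Qed.

Lemma sin_kPI k : sin (INR k * PI) = 0.
Proof.
  induction k. simpl. rewrite Rmult_0_l, sin_0; auto.
  rewrite S_INR. replace ((INR k + 1) * PI) with (INR k * PI + PI) by ring. rewrite neg_sin, IHk. ring.
Qed.

(* At an exceptional angle π/(2k): θ = kπ, so sin θ = 0 and cos θ = O(α) = (-1)^k. *)
Lemma exceptional_props a : exceptional a ->
  sth a = 0 /\ ((O_is_even a /\ cth a = 1) \/ (~ O_is_even a /\ cth a = -1)).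
Proof.
  intros [k [Hk ->]]. unfold sth, cth. rewrite theta_exc by auto. split. apply sin_kPI.
  destruct (Nat.Even_or_Odd k) as [He|Ho].
  - left. split. exists k; auto. apply cos_kPI; auto.
  - right. split. 2: apply cos_kPI; auto.
    intros [k' [Hk' [E He]]].
    assert (INR k = INR k').
    { assert (0 < INR k) by (apply lt_0_INR; lia). assert (0 < INR k') by (apply lt_0_INR; lia).
      pose proof PI_RGT_0.
      assert (E' : PI * (2 * INR k') = PI * (2 * INR k)).
      { replace (PI * (2 * INR k')) with (PI / (2 * INR k) * (2 * INR k) * (2 * INR k')) by (field; lra).
        rewrite E. field. lra. }
      nra. }
    apply INR_eq in H. subst. apply (Nat.Even_Odd_False k'); auto.
Qed.

Lemma sth_nonzero a : 0 < a < PI -> ~ exceptional a -> sth a <> 0.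
Proof.
  intros Ha Hne Hs. apply Hne. unfold sth in Hs. apply sin_eq_0_0 in Hs. destruct Hs as [k Hk].
  unfold theta in Hk. pose proof PI_RGT_0.
  assert (Hpos : 0 < PI ^ 2 / (2 * a)) by (apply Rdiv_lt_0_compat; [apply pow_lt|]; lra).
  rewrite Hk in Hpos. assert (0 < IZR k) by nra. apply lt_0_IZR in H0.
  exists (Z.to_nat k). split. lia.
  rewrite INR_IZR_INZ, Z2Nat.id by lia.
  assert (E : PI ^ 2 = IZR k * PI * (2 * a)) by (rewrite <- Hk; field; lra).
  assert (0 < IZR k) by (apply IZR_lt; lia).
  apply (Rmult_eq_reg_r (2 * IZR k)). 2: lra.
  field_simplify; try lra. simpl in E. nra.
Qed.

Lemma cth_sq_lt a : sth a <> 0 -> cth a ^ 2 < 1.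
Proof.
  intros H. unfold sth, cth in *. pose proof (sin2_cos2 (theta a)). unfold Rsqr in H0.
  assert (0 < sin (theta a) * sin (theta a)) by (apply Rsqr_pos_lt in H; unfold Rsqr in H; auto).
  simpl. lra.
Qed.

Lemma decP_true (P : Prop) : P -> decP P = true.
Proof. unfold decP. destruct (ClassicalDescription.excluded_middle_informative P); tauto. Qed.
Lemma decP_false (P : Prop) : ~ P -> decP P = false.
Proof. unfold decP. destruct (ClassicalDescription.excluded_middle_informative P); tauto. Qed.
Lemma decP_iff (P : Prop) : decP P = true <-> P.
Proof.
  unfold decP. destruct (ClassicalDescription.excluded_middle_informative P);
  split; intros; try tauto; discriminate.
Qed.
Lemma decP_f (P : Prop) : decP P = false -> ~ P.
Proof. intros H HP. rewrite decP_true in H; auto. discriminate. Qed.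

(** * Polygons without exceptional angles *)

Section NonExceptional.
Variables (n : nat) (alpha ell : nat -> R).
Hypothesis Hn : (1 <= n)%nat.
Hypothesis Halpha : forall j, (1 <= j <= n)%nat -> 0 < alpha j < PI.
Hypothesis Hell : forall j, (1 <= j <= n)%nat -> 0 < ell j.
Hypothesis Hne : ~ any_exceptional n alpha.

Local Notation al := (al n alpha).
Local Notation fsP := (poly_factors n alpha ell n).
Local Notation P := (Ppart n alpha ell n).

Lemma sth_al_nonzero j : (1 <= j <= n)%nat -> sth (al j) <> 0.
Proof.
  intros Hj. rewrite al_id by auto. apply sth_nonzero; auto.
  intro He. apply Hne. exists j; auto.
Qed.

Lemma admissible_poly_factors k : (k <= n)%nat -> admissible (poly_factors n alpha ell k).
Proof.
  induction k; intros Hk; simpl; constructor.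
  - simpl. split. apply cth_sq_lt, sth_al_nonzero; lia. rewrite ll_id by lia. apply Hell; lia.
  - apply IHk; lia.
Qed.

Lemma poly_factors_nonnil : fsP <> [].
Proof. destruct n; [lia|]. simpl; discriminate. Qed.

Definition sin_prod : R := prod1n n (fun j => sin (theta (alpha j))).

Lemma det_P s : rdet (P s) = sin_prod * sin_prod.
Proof.
  rewrite det_Ppart. unfold sin_prod. rewrite prod1n_mul. apply prod1n_ext. intros j Hj.
  rewrite al_id by auto. unfold cth. pose proof (sin2_cos2 (theta (alpha j))). unfold Rsqr in H.
  simpl. lra.
Qed.

Lemma sin_inv_prod_spec : sin_inv_prod n alpha n * sin_prod = 1.
Proof.
  unfold sin_prod. rewrite (prod1n_ext n _ (fun j => sth (al j))).
  2:{ intros j Hj. rewrite al_id by auto. auto. }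
  assert (forall k, (k <= n)%nat -> sin_inv_prod n alpha k * prod1n k (fun j => sth (al j)) = 1).
  { induction k; intros Hk. simpl. unfold prod1n; simpl; ring.
    simpl sin_inv_prod. rewrite prod1n_S.
    replace (/ sth (al (S k)) * sin_inv_prod n alpha k * (prod1n k (fun j => sth (al j)) * sth (al (S k))))
      with ((sin_inv_prod n alpha k * prod1n k (fun j => sth (al j))) * (/ sth (al (S k)) * sth (al (S k))))
      by ring.
    rewrite IHk by lia. rewrite Rinv_l. ring. apply sth_al_nonzero; lia. }
  apply H; lia.
Qed.

Lemma sin_prod_nonzero : sin_prod <> 0.
Proof. intro E. pose proof sin_inv_prod_spec. rewrite E in H. lra. Qed.

Definition Tnorm (s : R) : RMat := RMscal (sin_inv_prod n alpha n) (P s).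

Lemma Tmat_Tnorm s : Tmat n alpha ell s = embed (Tnorm s).
Proof. unfold Tmat, Tnorm. rewrite Tpart_eq, Mscal_embed. auto. Qed.

Lemma det_Tnorm s : rdet (Tnorm s) = 1.
Proof.
  unfold Tnorm. replace (rdet (RMscal (sin_inv_prod n alpha n) (P s))) with
    (sin_inv_prod n alpha n * sin_inv_prod n alpha n * rdet (P s)) by (unfold rdet, RMscal; simpl; ring).
  rewrite det_P.
  replace (sin_inv_prod n alpha n * sin_inv_prod n alpha n * (sin_prod * sin_prod))
    with ((sin_inv_prod n alpha n * sin_prod) * (sin_inv_prod n alpha n * sin_prod)) by ring.
  rewrite sin_inv_prod_spec. ring.
Qed.

Lemma trace_Tnorm s : rtr (Tnorm s) = 2 <-> rtr (P s) = 2 * sin_prod.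
Proof.
  unfold Tnorm. replace (rtr (RMscal (sin_inv_prod n alpha n) (P s))) with
    (sin_inv_prod n alpha n * rtr (P s)) by (unfold rtr, RMscal; simpl; ring).
  pose proof sin_inv_prod_spec. pose proof sin_prod_nonzero. split; intro H1.
  - apply (Rmult_eq_reg_l (sin_inv_prod n alpha n)). 2:{ intro E; rewrite E in H; lra. }
    rewrite H1. replace (sin_inv_prod n alpha n * (2 * sin_prod)) with (2 * (sin_inv_prod n alpha n * sin_prod)) by ring.
    rewrite H. ring.
  - rewrite H1. replace (sin_inv_prod n alpha n * (2 * sin_prod)) with (2 * (sin_inv_prod n alpha n * sin_prod)) by ring.
    rewrite H. ring.
Qed.

Lemma Tnorm_id_iff s : Tnorm s = RId <-> P s = RMscal sin_prod RId.
Proof.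
  pose proof sin_inv_prod_spec as Hp. pose proof sin_prod_nonzero.
  assert (Hq : sin_inv_prod n alpha n <> 0) by (intro Z; rewrite Z in Hp; lra).
  unfold Tnorm. split; intro E.
  - assert (E1 := f_equal r11 E). assert (E2 := f_equal r12 E).
    assert (E3 := f_equal r21 E). assert (E4 := f_equal r22 E).
    destruct (P s) as [a b c d]. unfold RMscal, RId in *; simpl in *.
    f_equal; apply (Rmult_eq_reg_l (sin_inv_prod n alpha n)); auto; nra.
  - rewrite E. apply RMat_eq; unfold RMscal, RId; simpl; nra.
Qed.

Lemma FP_nonexc s : FP n alpha ell s = rtr (P s) / 2 - sin_prod.
Proof. apply FP_trace; auto. Qed.

Lemma qe_iff_nonexc s : 0 <= s -> (quasi_eigenvalue n alpha ell s <-> FP n alpha ell s = 0).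
Proof.
  intros Hs. unfold quasi_eigenvalue. rewrite FP_nonexc.
  split.
  - intros [_ [[_ He]|[Ha _]]]; [|contradiction].
    rewrite Tmat_Tnorm, eigenvalue_1_iff_trace, trace_Tnorm in He by apply det_Tnorm. lra.
  - intro H. split; auto. left. split; auto.
    rewrite Tmat_Tnorm, eigenvalue_1_iff_trace, trace_Tnorm by apply det_Tnorm. lra.
Qed.

Lemma smooth_FP : smooth (FP n alpha ell).
Proof. apply (smooth_ext (fun z => rtr (chain fsP z) / 2 - sin_prod)). intros; rewrite FP_nonexc; auto. apply smooth_tr. Qed.

Lemma dpl_FP y : derivable_pt_lim (FP n alpha ell) y (rtr (chain' fsP y) / 2).
Proof. apply (dpl_ext (fun z => rtr (chain fsP z) / 2 - sin_prod)). intros; rewrite FP_nonexc; auto. apply dpl_tr, mat_deriv_chain. Qed.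

Lemma chain_det_derivs y :
  det_d1 (chain fsP y) (chain' fsP y) = 0 /\ det_d2 (chain fsP y) (chain' fsP y) (chain'' fsP y) = 0.
Proof. apply (const_det_derivs (chain fsP) (chain' fsP) (chain'' fsP) (sin_prod * sin_prod)).
  - apply mat_deriv_chain.
  - apply mat_deriv_chain'.
  - intros; apply det_P.
Qed.

Lemma wronskian_P s u : u <> (0,0) -> 0 < wedge (mvec (P s) u) (mvec (chain' fsP s) u).
Proof. intros Hu. apply wronskian_pos; auto using admissible_poly_factors, poly_factors_nonnil. Qed.

Lemma double_root_nonexc s : P s = RMscal sin_prod RId -> root_mult (FP n alpha ell) s 2.
Proof.
  intros HP. destruct (chain_det_derivs s) as [D1 D2]. fold (P s) in D1, D2. rewrite HP in D1, D2.
  assert (Hpos := wronskian_P s). rewrite HP in Hpos.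
  destruct (scalar_trace_derivs _ _ _ sin_prod_nonzero D1 D2 Hpos) as [T1 T2].
  apply (root_mult_double _ (fun z => rtr (chain' fsP z) / 2 - 0) s (rtr (chain'' fsP s) / 2)).
  - apply smooth_FP.
  - intros y. eapply dpl_eq; [|apply dpl_FP]. ring.
  - rewrite FP_nonexc, HP. unfold rtr, RMscal, RId; simpl. field.
  - rewrite T1. field.
  - apply dpl_tr, mat_deriv_chain'.
  - lra.
Qed.

Lemma simple_root_nonexc s : FP n alpha ell s = 0 -> P s <> RMscal sin_prod RId ->
  root_mult (FP n alpha ell) s 1.
Proof.
  intros HF HP. destruct (chain_det_derivs s) as [D1 _].
  assert (HT : rtr (P s) = 2 * sin_prod) by (rewrite FP_nonexc in HF; lra).
  pose proof (trace_deriv_nonzero _ _ _ sin_prod_nonzero HT (det_P s) HP D1 (wronskian_P s)).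
  apply (root_mult_simple _ s (rtr (chain' fsP s) / 2)); auto using smooth_FP, dpl_FP. lra.
Qed.

Lemma mult_pos_nonexc s m : 0 < s -> quasi_eigenvalue n alpha ell s ->
  (qe_mult_pos n alpha ell s m <-> root_mult (FP n alpha ell) s m).
Proof.
  intros Hs HQ. assert (HF : FP n alpha ell s = 0) by (apply qe_iff_nonexc; auto; lra).
  assert (HT : rtr (P s) = 2 * sin_prod) by (rewrite FP_nonexc in HF; lra).
  unfold qe_mult_pos.
  assert (Hg : forall g, geom_mult_1 (Tmat n alpha ell s) g -> root_mult (FP n alpha ell) s g ->
     ((~ any_exceptional n alpha /\ geom_mult_1 (Tmat n alpha ell s) m) \/
      (any_exceptional n alpha /\ m = length (filter (fun E => decP (kappa_cond n alpha ell E s)) (seq 1 n)))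
      <-> root_mult (FP n alpha ell) s m)).
  { intros g G R. split.
    - intros [[_ G']|[Ha _]]; [|contradiction]. rewrite (geom_mult_unique _ _ _ G' G). auto.
    - intros R'. left. split; auto. rewrite (root_mult_unique _ _ _ _ R' R). auto. }
  rewrite Tmat_Tnorm in Hg |- *.
  destruct (RMat_eq_dec (P s) (RMscal sin_prod RId)) as [E|E].
  - apply (Hg 2%nat). apply Tnorm_id_iff in E. rewrite E. apply geom_mult_id. apply double_root_nonexc; auto.
  - apply (Hg 1%nat). apply geom_mult_parabolic. apply det_Tnorm. apply trace_Tnorm; auto.
    rewrite Tnorm_id_iff. auto. apply simple_root_nonexc; auto.
Qed.

Lemma chain_at_0 fs : r12 (chain fs 0) = 0 /\ r21 (chain fs 0) = 0.
Proof.
  induction fs as [|f fs IH]; simpl. unfold RId; simpl; auto.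
  destruct IH as [H1 H2]. unfold RMmul, vfac, diag_pm, rot; simpl.
  rewrite Rmult_0_r, cos_0, sin_0, H1, H2. split; ring.
Qed.

Lemma mult_zero_nonexc : quasi_eigenvalue n alpha ell 0 ->
  forall m, (root_mult (FP n alpha ell) 0 m <-> INR m = 2 * qe_mult_zero n alpha).
Proof.
  intros HQ m. unfold qe_mult_zero. rewrite decP_false by auto.
  assert (HF : FP n alpha ell 0 = 0) by (apply qe_iff_nonexc; auto; lra).
  assert (HP : P 0 = RMscal sin_prod RId).
  { rewrite FP_nonexc in HF. pose proof (det_P 0). destruct (chain_at_0 fsP) as [H1 H2].
    unfold Ppart in *. destruct (chain fsP 0) as [a b c d]. unfold rtr, rdet, RMscal, RId in *; simpl in *. subst.
    assert ((a - d) * (a - d) = 0) by nra. assert (a = d) by nra. f_equal; nra. }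
  pose proof (double_root_nonexc 0 HP). split.
  - intros R. rewrite (root_mult_unique _ _ _ _ R H). simpl. ring.
  - intros E. assert (m = 2%nat) by (apply INR_eq; rewrite E; simpl; ring). subst. auto.
Qed.

End NonExceptional.

(** * Walking backwards along the cycle of vertices *)

Section Walk.
Variables (n : nat) (alpha ell : nat -> R).
Hypothesis Hn : (1 <= n)%nat.

Local Notation al := (al n alpha).
Local Notation ll := (ll n ell).

Definition pr (j : nat) : nat := wrap n (j - 1).

Lemma pr_gt1 y : (2 <= y <= n)%nat -> pr y = (y - 1)%nat.
Proof. intros H. unfold pr. apply wrap_id; lia. Qed.
Lemma pr_1 : pr 1 = n.
Proof. unfold pr. simpl. apply wrap_0; auto. Qed.

Lemma iter_pr_lt d y : (1 <= y <= n)%nat -> (d < y)%nat -> Nat.iter d pr y = (y - d)%nat.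
Proof.
  induction d; intros Hy Hd; simpl. lia.
  rewrite IHd by lia. rewrite pr_gt1 by lia. lia.
Qed.

Lemma iter_pr_ge e y : (1 <= y <= n)%nat -> (e < n)%nat -> Nat.iter (e + y) pr y = (n - e)%nat.
Proof.
  intros Hy He. rewrite Nat.iter_add.
  assert (Nat.iter y pr y = n).
  { destruct y as [|y]; [lia|]. simpl. rewrite iter_pr_lt by lia. replace (S y - y)%nat with 1%nat by lia. apply pr_1. }
  rewrite H. apply iter_pr_lt; lia.
Qed.

Lemma reach y x : (1 <= y <= n)%nat -> (1 <= x <= n)%nat ->
  exists d, (d <= n - 1)%nat /\ Nat.iter d pr y = x /\
    ((y < n)%nat -> x <> S y -> (d <= n - 2)%nat) /\ (y = n -> x <> 1%nat -> (d <= n - 2)%nat).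
Proof.
  intros Hy Hx. destruct (le_lt_dec x y) as [Hle|Hlt].
  - exists (y - x)%nat. split. lia. split. rewrite iter_pr_lt by lia. lia. split; intros; lia.
  - exists (n - x + y)%nat. split. lia. split.
    + rewrite iter_pr_ge by lia. lia.
    + split; intros; lia.
Qed.

(* The factors met walking backwards from vertex j until the first exceptional
   vertex (excluded), with at most f steps: the real counterpart of [back]. *)
Fixpoint back_factors (f j : nat) : list (R * R) :=
  match f with
  | O => []
  | S f' => if excb (al j) then [] else (cth (al j), ll j) :: back_factors f' (pr j)
  end.

Lemma back_factors_fuel f y : (exists d, (d <= f)%nat /\ excb (al (Nat.iter d pr y)) = true) ->
  back_factors f y = back_factors (S f) y.
Proof.
  revert y; induction f; intros y [d [Hd He]].
  - assert (d = O) by lia. subst. simpl in *. rewrite He. auto.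
  - change (back_factors (S (S f)) y) with (if excb (al y) then [] else (cth (al y), ll y) :: back_factors (S f) (pr y)).
    change (back_factors (S f) y) with (if excb (al y) then [] else (cth (al y), ll y) :: back_factors f (pr y)).
    destruct (excb (al y)) eqn:Ey; auto. f_equal. apply IHf.
    destruct d as [|d]. simpl in He. congruence.
    exists d. split. lia. rewrite <- He. simpl. rewrite <- Nat.iter_succ_r. auto.
Qed.

Lemma prevE_fuel f y : (exists d, (d <= f)%nat /\ excb (al (Nat.iter d pr y)) = true) ->
  prevE n alpha f y = prevE n alpha (S f) y.
Proof.
  revert y; induction f; intros y [d [Hd He]].
  - assert (d = O) by lia. subst. simpl in *. rewrite He. auto.
  - change (prevE n alpha (S (S f)) y) with (if excb (al y) then y else prevE n alpha (S f) (pr y)).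
    change (prevE n alpha (S f) y) with (if excb (al y) then y else prevE n alpha f (pr y)).
    destruct (excb (al y)) eqn:Ey; auto. apply IHf.
    destruct d as [|d]. simpl in He. congruence.
    exists d. split. lia. rewrite <- He. simpl. rewrite <- Nat.iter_succ_r. auto.
Qed.

Lemma prevE_first f d y : (d <= f)%nat -> excb (al (Nat.iter d pr y)) = true ->
  (forall d', (d' < d)%nat -> excb (al (Nat.iter d' pr y)) = false) ->
  prevE n alpha f y = Nat.iter d pr y.
Proof.
  revert f y; induction d; intros f y Hd He Hb.
  - simpl in *. destruct f; simpl; auto. rewrite He. auto.
  - destruct f as [|f]; [lia|].
    change (prevE n alpha (S f) y) with (if excb (al y) then y else prevE n alpha f (pr y)).
    assert (E0 : excb (al y) = false) by (apply (Hb O); lia). rewrite E0.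
    rewrite Nat.iter_succ_r. apply IHd. lia.
    rewrite <- Nat.iter_succ_r. auto.
    intros d' Hd'. rewrite <- Nat.iter_succ_r. apply Hb. lia.
Qed.

End Walk.

(* parity a = true iff O(a) = 1; it selects X_even / X_odd and the
   corresponding basis vector. *)
Definition parity (a : R) : bool := decP (O_is_even a).
Definition basis_vec (b : bool) : R * R := if b then (1, 0) else (0, 1).
Definition coord (b : bool) (v : R * R) : R := if b then fst v else snd v.
Definition vsc (c : R) (v : R * R) : R * R := (c * fst v, c * snd v).

Lemma entry_mvec b b' Y : entry b b' Y = coord b (mvec Y (basis_vec b')).
Proof. destruct b, b'; unfold entry, coord, mvec, basis_vec; simpl; ring. Qed.
Lemma mvec_vsc A c v : mvec A (vsc c v) = vsc c (mvec A v).
Proof. unfold mvec, vsc; simpl; f_equal; ring. Qed.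
Lemma mvec_id v : mvec RId v = v.
Proof. destruct v; unfold mvec, RId; simpl; f_equal; ring. Qed.
Lemma vsc_1 v : vsc 1 v = v.
Proof. destruct v; unfold vsc; simpl; f_equal; ring. Qed.
Lemma vsc_vsc a b v : vsc a (vsc b v) = vsc (a * b) v.
Proof. unfold vsc; simpl; f_equal; ring. Qed.
Lemma coord_vsc b c v : coord b (vsc c v) = c * coord b v.
Proof. destruct b; unfold coord, vsc; simpl; ring. Qed.

Lemma parity_cth a : exceptional a -> cth a = if parity a then 1 else -1.
Proof.
  intros H. destruct (exceptional_props a H) as [_ [[He Hc]|[He Hc]]]; unfold parity.
  - rewrite decP_true; auto.
  - rewrite decP_false; auto.
Qed.

(* At an exceptional vertex, diag(1 ± 1, 1 ∓ 1) is twice a coordinate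
   projection, so the factor has rank one. *)
Lemma vfac_exceptional a l s w : exceptional a ->
  mvec (vfac (cth a) l s) w = vsc (2 * coord (parity a) (mvec (rot (l * s)) w)) (basis_vec (parity a)).
Proof.
  intros H. rewrite (parity_cth a H).
  destruct (parity a); unfold mvec, vfac, RMmul, diag_pm, rot, vsc, coord, basis_vec; simpl; f_equal; ring.
Qed.

Lemma trace_exceptional a l s X : exceptional a ->
  rtr (RMmul (vfac (cth a) l s) X) =
  2 * coord (parity a) (mvec (RMmul (rot (l * s)) X) (basis_vec (parity a))).
Proof.
  intros H. rewrite (parity_cth a H).
  destruct (parity a); unfold rtr, mvec, vfac, RMmul, diag_pm, rot, coord, basis_vec; simpl; ring.
Qed.

(** * Polygons with exceptional angles *)

Section Exceptional.
Variables (n : nat) (alpha ell : nat -> R).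
Hypothesis Hn : (1 <= n)%nat.
Hypothesis Halpha : forall j, (1 <= j <= n)%nat -> 0 < alpha j < PI.
Hypothesis Hell : forall j, (1 <= j <= n)%nat -> 0 < ell j.
Hypothesis Hany : any_exceptional n alpha.

Local Notation al := (al n alpha).
Local Notation ll := (ll n ell).
Local Notation back_factors := (back_factors n alpha ell).
Local Notation pr := (pr n).

Lemma al_range j : 0 < al j < PI.
Proof. unfold Defs.al. apply Halpha. apply wrap_range; auto. Qed.
Lemma ll_pos j : 0 < ll j.
Proof. unfold Defs.ll. apply Hell. apply wrap_range; auto. Qed.

Lemma excb_iff j : (1 <= j <= n)%nat -> (excb (al j) = true <-> exceptional (alpha j)).
Proof. intros Hj. unfold excb. rewrite decP_iff. rewrite al_id; auto. tauto. Qed.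
Lemma excb_false j : (1 <= j <= n)%nat -> ~ exceptional (alpha j) -> excb (al j) = false.
Proof. intros Hj H. unfold excb. apply decP_false. rewrite al_id; auto. Qed.

(* Arcs between consecutive exceptional vertices carry only non-exceptional
   factors, hence are admissible. *)
Lemma admissible_back_factors f j : admissible (back_factors f j).
Proof.
  revert j; induction f; intros j; simpl. constructor.
  destruct (excb (al j)) eqn:E. constructor. constructor; [|apply IHf]. simpl. split.
  - apply cth_sq_lt. apply sth_nonzero. apply al_range. intro Hx. unfold excb in E.
    rewrite decP_true in E; auto. discriminate.
  - apply ll_pos.
Qed.

Lemma back_eq f j s : exists c, c <> 0 /\ back n alpha ell f j s = Mscal c (embed (chain (back_factors f j) s)).
Proof.
  revert j; induction f; intros j.
  - exists 1. split. lra. simpl. rewrite embed_id, Mscal_1. auto.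
  - simpl. destruct (excb (al j)) eqn:E.
    + exists 1. split. lra. simpl. rewrite embed_id, Mscal_1. auto.
    + destruct (IHf (wrap n (j - 1))) as [c [Hc Hb]]. exists (/ sth (al j) * c). split.
      * apply Rmult_integral_contrapositive. split; auto. apply Rinv_neq_0_compat.
        apply sth_nonzero. apply al_range. intro Hx. unfold excb in E. rewrite decP_true in E; auto. discriminate.
      * rewrite Hb, transfer_step. reflexivity.
Qed.

(* For an exceptional vertex E with predecessor exceptional vertex E':
   the real arc chain (U_κ up to a scalar) and its entry g_E tested by the
   κ-condition, selected by the parities of E and E'. *)
Definition arc_factors (E : nat) : list (R * R) := (0, ll E) :: back_factors (n - 1) (wrap n (E - 1)).
Definition arc_entry (E : nat) (s : R) : R :=
  entry (parity (alpha E)) (parity (al (prev_exc n alpha E))) (chain (arc_factors E) s).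

Lemma Umat_eq E s : exists c, c <> 0 /\ Umat n alpha ell E s = Mscal c (embed (chain (arc_factors E) s)).
Proof.
  destruct (back_eq (n - 1) (wrap n (E - 1)) s) as [c [Hc Hb]]. exists c. split; auto.
  unfold Umat. rewrite Hb, B_embed, Mmul_scal_r, embed_mul. unfold arc_factors. simpl. rewrite vfac_zero. auto.
Qed.

Lemma kappa_iff E s : (1 <= E <= n)%nat ->
  (kappa_cond n alpha ell E s <-> exceptional (alpha E) /\ arc_entry E s = 0).
Proof.
  intros HE. unfold kappa_cond. destruct (Umat_eq E s) as [c [Hc HU]]. rewrite HU.
  replace (Xof (al (prev_exc n alpha E))) with (Xsel (parity (al (prev_exc n alpha E)))) by reflexivity.
  replace (Xof (alpha E)) with (Xsel (parity (alpha E))) by reflexivity.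
  rewrite cdot_embed. fold (arc_entry E s). split.
  - intros [H1 H2]. split; auto. apply (f_equal fst) in H2. simpl in H2.
    apply Rmult_integral in H2. destruct H2; auto. contradiction.
  - intros [H1 H2]. split; auto. rewrite H2. unfold C0. f_equal. ring.
Qed.

Lemma last_exceptional : exists Es, (1 <= Es <= n)%nat /\ exceptional (alpha Es) /\
  (forall j, (Es < j <= n)%nat -> ~ exceptional (alpha j)).
Proof.
  assert (Hm : forall m, (exists j, (1 <= j <= m)%nat /\ exceptional (alpha j)) ->
    exists Es, (1 <= Es <= m)%nat /\ exceptional (alpha Es) /\ (forall j, (Es < j <= m)%nat -> ~ exceptional (alpha j))).
  { induction m; intros [j [Hj Hx]]. lia.
    destruct (ClassicalDescription.excluded_middle_informative (exceptional (alpha (S m)))) as [E|E].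
    - exists (S m). split. lia. split; auto. intros; lia.
    - destruct IHm as [Es [H1 [H2 H3]]].
      + exists j. split; auto. destruct (Nat.eq_dec j (S m)); [subst; contradiction|lia].
      + exists Es. split. lia. split; auto. intros j' Hj'. destruct (Nat.eq_dec j' (S m)). subst; auto. apply H3; lia. }
  destruct Hany as [j [Hj Hx]]. destruct (Hm n) as [Es H]. exists j; auto. exists Es. exact H.
Qed.

Definition back_chain (k : nat) (s : R) : RMat := chain (back_factors (n - 1) (wrap n k)) s.
Definition prev_exc_at (k : nat) : nat := prevE n alpha (n - 1) (wrap n k).

Lemma back_factors_exc f j : excb (al j) = true -> back_factors f j = [].
Proof. intros H. destruct f; simpl; auto. rewrite H. auto. Qed.
Lemma prevE_exc f j : excb (al j) = true -> prevE n alpha f j = j.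
Proof. intros H. destruct f; simpl; auto. rewrite H. auto. Qed.

Lemma step_nonexc k x : (k < n)%nat -> ~ exceptional (alpha (S k)) -> (1 <= x <= n)%nat -> exceptional (alpha x) ->
  x <> S k ->
  back_factors (n - 1) (wrap n (S k)) = (cth (al (S k)), ll (S k)) :: back_factors (n - 1) (wrap n k) /\
  prev_exc_at (S k) = prev_exc_at k.
Proof.
  intros Hk Hne Hx Hex Hxk.
  assert (Hn2 : (2 <= n)%nat) by lia.
  rewrite (wrap_id n (S k)) by lia.
  assert (Ey : (1 <= wrap n k <= n)%nat) by (apply wrap_range; auto).
  assert (Hd : exists d, (d <= n - 2)%nat /\ excb (al (Nat.iter d pr (wrap n k))) = true).
  { destruct (reach n Hn (wrap n k) x Ey Hx) as [d [Hd1 [Hd2 [Hd3 Hd4]]]].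
    exists d. split.
    - destruct k as [|k].
      + rewrite wrap_0 in * by auto. apply Hd4; auto.
      + rewrite wrap_id in * by lia. apply Hd3; auto; lia.
    - rewrite Hd2. apply excb_iff; auto. }
  replace (n - 1)%nat with (S (n - 2)) by lia.
  assert (Ek : excb (al (S k)) = false) by (apply excb_false; auto; lia).
  assert (Epr : pr (S k) = wrap n k) by (unfold pr; f_equal; lia).
  split.
  - simpl. rewrite Ek. f_equal. rewrite Epr. apply back_factors_fuel; auto.
  - unfold prev_exc_at. replace (n - 1)%nat with (S (n - 2)) by lia. rewrite (wrap_id n (S k)) by lia.
    change (prevE n alpha (S (n-2)) (S k)) with (if excb (al (S k)) then S k else prevE n alpha (n-2) (pr (S k))).
    rewrite Ek, Epr. apply prevE_fuel; auto.
Qed.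

Definition exc_list (k : nat) : list nat := filter (fun j => excb (al j)) (seq 1 k).

Section LastExceptional.
Variable Es : nat.
Hypothesis HEs : (1 <= Es <= n)%nat.
Hypothesis HxEs : exceptional (alpha Es).
Hypothesis Hmax : forall j, (Es < j <= n)%nat -> ~ exceptional (alpha j).

Lemma prev_exc_at_0 : prev_exc_at 0 = Es.
Proof.
  unfold prev_exc_at. rewrite wrap_0 by auto.
  assert (Hit : Nat.iter (n - Es) pr n = Es) by (rewrite iter_pr_lt by lia; lia).
  rewrite (prevE_first n alpha Hn (n - 1) (n - Es)); auto. lia.
  rewrite Hit. apply excb_iff; auto.
  intros d' Hd'. rewrite iter_pr_lt by lia. apply excb_false. lia. apply Hmax. lia.
Qed.

Lemma chain_exc_invariant k s : (k < Es)%nat ->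
  mvec (Ppart n alpha ell k s) (mvec (back_chain 0 s) (basis_vec (parity (al (prev_exc_at 0))))) =
  vsc (prodL (exc_list k) (fun j => 2 * arc_entry j s)) (mvec (back_chain k s) (basis_vec (parity (al (prev_exc_at k))))).
Proof.
  induction k; intros Hk.
  - simpl. rewrite mvec_id. unfold exc_list, prodL; simpl. rewrite vsc_1. auto.
  - change (Ppart n alpha ell (S k) s) with (RMmul (vfac (cth (al (S k))) (ll (S k)) s) (Ppart n alpha ell k s)).
    rewrite mvec_mul, IHk by lia. rewrite mvec_vsc.
    assert (HL : exc_list (S k) = exc_list k ++ (if excb (al (S k)) then [S k] else [])).
    { unfold exc_list. rewrite seq_S, filter_app. simpl. destruct (excb (al (S k))); auto. }
    rewrite HL. destruct (excb (al (S k))) eqn:E.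
    + assert (Hx : exceptional (al (S k))). { apply (proj1 (decP_iff _)). exact E. }
      rewrite vfac_exceptional by auto. rewrite prodL_app.
      change (prodL [S k] (fun j => 2 * arc_entry j s)) with (2 * arc_entry (S k) s * 1).
      assert (HB : back_chain (S k) s = RId).
      { unfold back_chain. rewrite (wrap_id n (S k)) by lia. rewrite back_factors_exc by auto. auto. }
      assert (HP : prev_exc_at (S k) = S k).
      { unfold prev_exc_at. rewrite (wrap_id n (S k)) by lia. apply prevE_exc; auto. }
      rewrite HB, HP, mvec_id, vsc_vsc.
      f_equal. unfold arc_entry. rewrite <- (al_id n alpha (S k)) by lia.
      replace (prev_exc n alpha (S k)) with (prev_exc_at k) by (unfold prev_exc, prev_exc_at; f_equal; f_equal; lia).
      rewrite entry_mvec. unfold arc_factors. simpl chain. rewrite vfac_zero. rewrite mvec_mul.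
      rewrite ?Nat.sub_0_r. replace (wrap n (S k - 1)) with (wrap n k) by (f_equal; lia). fold (back_chain k s). ring.
    + rewrite app_nil_r. f_equal.
      assert (Hne : ~ exceptional (alpha (S k))).
      { intro Hx. apply (excb_iff (S k)) in Hx. congruence. lia. }
      destruct (step_nonexc k Es ltac:(lia) Hne HEs HxEs ltac:(lia)) as [H1 H2].
      rewrite H2. unfold back_chain at 2. rewrite H1. simpl. rewrite mvec_mul. auto.
Qed.

Lemma Ppart_back_chain d s : (Es + d <= n)%nat ->
  Ppart n alpha ell (Es + d) s = RMmul (back_chain (Es + d) s) (Ppart n alpha ell Es s).
Proof.
  induction d; intros Hd.
  - rewrite Nat.add_0_r. unfold back_chain. rewrite (wrap_id n Es) by auto.
    rewrite back_factors_exc. simpl. rewrite RMmul_1_l. auto. apply excb_iff; auto.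
  - replace (Es + S d)%nat with (S (Es + d)) by lia.
    assert (Hne : ~ exceptional (alpha (S (Es + d)))) by (apply Hmax; lia).
    destruct (step_nonexc (Es + d) Es ltac:(lia) Hne HEs HxEs ltac:(lia)) as [H1 _].
    change (Ppart n alpha ell (S (Es + d)) s) with
      (RMmul (vfac (cth (al (S (Es + d)))) (ll (S (Es + d))) s) (Ppart n alpha ell (Es + d) s)).
    rewrite IHd by lia. unfold back_chain at 2. rewrite H1. simpl. rewrite RMmul_assoc. auto.
Qed.

Lemma filter_all_false {T} (f : T -> bool) L : (forall x, In x L -> f x = false) -> filter f L = [].
Proof. induction L; simpl; intros H; auto. rewrite H by auto. apply IHL; auto. Qed.

Lemma exc_list_split : exc_list n = exc_list (Es - 1) ++ [Es].
Proof.
  unfold exc_list. replace (seq 1 n) with (seq 1 (Es + (n - Es))) by (f_equal; lia). rewrite seq_app, filter_app.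
  rewrite (filter_all_false _ (seq (1 + Es) (n - Es))).
  2:{ intros x Hx'. apply in_seq in Hx'. apply excb_false. lia. apply Hmax. lia. }
  replace Es with (S (Es - 1)) at 1 by lia. rewrite seq_S, filter_app. simpl.
  replace (S (Es - 1)) with Es by lia. rewrite (proj2 (excb_iff Es HEs) HxEs), app_nil_r. auto.
Qed.

(* The trace of P_n factorizes over the exceptional vertices:
   tr P_n = Π_E 2 g_E  (cut the cycle at E_s and use the invariant). *)
Lemma trace_factorization s : rtr (Ppart n alpha ell n s) = prodL (exc_list n) (fun j => 2 * arc_entry j s).
Proof.
  replace (Ppart n alpha ell n s) with (Ppart n alpha ell (Es + (n - Es)) s) by (f_equal; lia).
  rewrite Ppart_back_chain by lia.
  replace (back_chain (Es + (n - Es)) s) with (back_chain n s) by (f_equal; lia).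
  rewrite rtr_comm.
  replace (Ppart n alpha ell Es s) with (RMmul (vfac (cth (al Es)) (ll Es) s) (Ppart n alpha ell (Es - 1) s)).
  2:{ destruct Es as [|e]; [lia|]. simpl. rewrite Nat.sub_0_r. auto. }
  rewrite <- RMmul_assoc.
  assert (Hx : exceptional (al Es)) by (rewrite al_id; auto).
  rewrite trace_exceptional by auto. rewrite !mvec_mul.
  replace (back_chain n s) with (back_chain 0 s) by (unfold back_chain; rewrite wrap_0, (wrap_id n n) by lia; auto).
  replace (al Es) with (al (prev_exc_at 0)) at 2 by (rewrite prev_exc_at_0; auto).
  rewrite chain_exc_invariant by lia. rewrite mvec_vsc, coord_vsc.
  rewrite exc_list_split, prodL_app. change (prodL [Es] (fun j => 2 * arc_entry j s)) with (2 * arc_entry Es s * 1).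
  unfold arc_entry. rewrite <- (al_id n alpha Es) by auto. rewrite entry_mvec. unfold arc_factors. simpl chain.
  rewrite vfac_zero, mvec_mul. fold (back_chain (Es - 1) s).
  replace (prev_exc n alpha Es) with (prev_exc_at (Es - 1)) by reflexivity. ring.
Qed.
End LastExceptional.

(* With an exceptional angle Π sin θ_j = 0, so F^P = Π_E 2 g_E / 2. *)
Lemma FP_exc s : FP n alpha ell s = prodL (exc_list n) (fun j => 2 * arc_entry j s) / 2.
Proof.
  destruct last_exceptional as [Es [H1 [H2 H3]]].
  rewrite FP_trace by auto. rewrite (trace_factorization Es H1 H2 H3).
  rewrite (prod1n_zero n _ Es) by (auto; destruct (exceptional_props _ H2) as [Hs _]; exact Hs). ring.
Qed.

Lemma admissible_arc_factors E : admissible (arc_factors E).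
Proof. unfold arc_factors. constructor. simpl. split. lra. apply ll_pos. apply admissible_back_factors. Qed.

(* The zeros of every g_E are simple: by the Wronskian of the arc chain on the
   selected basis vector, g_E and g_E' cannot vanish together. *)
Lemma arc_entry_simple E y : arc_entry E y = 0 -> entry (parity (alpha E)) (parity (al (prev_exc n alpha E))) (chain' (arc_factors E) y) <> 0.
Proof.
  unfold arc_entry. set (b := parity (alpha E)). set (b' := parity (al (prev_exc n alpha E))). intros H0 H1.
  assert (Hp := wronskian_pos (arc_factors E) y (basis_vec b') (admissible_arc_factors E) ltac:(unfold arc_factors; discriminate)
     ltac:(destruct b'; unfold basis_vec; intro Z; injection Z; intros; lra)).
  rewrite entry_mvec in H0, H1. unfold wedge in Hp.
  destruct b; unfold coord in *; rewrite H0, H1 in Hp; lra.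
Qed.

Definition arc_order (E : nat) (y : R) : nat := if decP (arc_entry E y = 0) then 1%nat else 0%nat.

Lemma arc_entry_order E y : root_mult (fun z => 2 * arc_entry E z) y (arc_order E y).
Proof.
  unfold arc_order. destruct (decP (arc_entry E y = 0)) eqn:D.
  - apply (proj1 (decP_iff _)) in D. apply (root_mult_simple _ y (2 * entry (parity (alpha E)) (parity (al (prev_exc n alpha E))) (chain' (arc_factors E) y))).
    apply smooth_entry. rewrite D; ring. apply dpl_entry.
    pose proof (arc_entry_simple E y D). lra.
  - apply root_mult_nonzero. apply smooth_entry. intro Z. assert (arc_entry E y = 0) by lra.
    apply (decP_f _ D); auto.
Qed.

Definition total_order (L : list nat) (y : R) : nat := fold_right plus 0%nat (map (fun E => arc_order E y) L).

Lemma root_mult_prodL L y : root_mult (fun z => prodL L (fun j => 2 * arc_entry j z) / 2) y (total_order L y).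
Proof.
  induction L as [|E L IH].
  - unfold prodL, total_order; simpl. apply root_mult_nonzero. apply smooth_const. lra.
  - unfold total_order; simpl. fold (total_order L y).
    apply (root_mult_ext (fun z => (2 * arc_entry E z) * (prodL L (fun j => 2 * arc_entry j z) / 2))).
    { intros z. unfold prodL; simpl. unfold Rdiv; ring. }
    apply root_mult_mult. apply arc_entry_order. auto.
Qed.

Lemma in_exc_list j : In j (exc_list n) <-> (1 <= j <= n)%nat /\ exceptional (alpha j).
Proof.
  unfold exc_list. rewrite filter_In, in_seq. split.
  - intros [H1 H2]. split. lia. apply excb_iff; auto. lia.
  - intros [H1 H2]. split. lia. apply excb_iff; auto.
Qed.

Lemma qe_iff_exc s : 0 <= s -> (quasi_eigenvalue n alpha ell s <-> FP n alpha ell s = 0).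
Proof.
  intros Hs. unfold quasi_eigenvalue. rewrite FP_exc.
  assert (E1 : prodL (exc_list n) (fun j => 2 * arc_entry j s) / 2 = 0 <-> prodL (exc_list n) (fun j => 2 * arc_entry j s) = 0) by (split; intro; lra).
  rewrite E1, prodL_zero. split.
  - intros [_ [[Hna _]|[_ [E [HE Hk]]]]]. contradiction.
    apply kappa_iff in Hk; auto. destruct Hk as [Hx Hg]. exists E. split. apply in_exc_list; auto. rewrite Hg; ring.
  - intros [E [HE Hg]]. apply in_exc_list in HE. split; auto. right. split; auto. exists E. split. tauto.
    apply kappa_iff. tauto. split. tauto. lra.
Qed.

Lemma total_order_cons x L y : total_order (x :: L) y = (arc_order x y + total_order L y)%nat.
Proof. reflexivity. Qed.

Lemma count_kappa s L : (forall E, In E L -> (1 <= E <= n)%nat) ->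
  length (filter (fun E => decP (kappa_cond n alpha ell E s)) L) = total_order (filter (fun j => excb (al j)) L) s.
Proof.
  induction L as [|x L IH]; intros HL; simpl; auto.
  assert (Hx : (1 <= x <= n)%nat) by (apply HL; simpl; auto).
  specialize (IH ltac:(intros; apply HL; simpl; auto)).
  destruct (excb (al x)) eqn:Ex.
  - rewrite total_order_cons. unfold arc_order at 1.
    destruct (decP (arc_entry x s = 0)) eqn:Dg.
    + rewrite decP_true. simpl. rewrite IH. auto. apply kappa_iff; auto. split.
      apply excb_iff; auto. apply (proj1 (decP_iff _)); auto.
    + rewrite decP_false. simpl. rewrite IH. auto. intro Hk. apply kappa_iff in Hk; auto. destruct Hk as [_ Hk].
      apply (decP_f _ Dg); auto.
  - rewrite decP_false. auto. intro Hk. apply kappa_iff in Hk; auto. destruct Hk as [Hk _].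
    apply excb_iff in Hk; auto. congruence.
Qed.

Lemma mult_pos_exc s m : (qe_mult_pos n alpha ell s m <-> root_mult (FP n alpha ell) s m).
Proof.
  unfold qe_mult_pos.
  assert (R := root_mult_prodL (exc_list n) s).
  apply (root_mult_ext _ (FP n alpha ell)) in R. 2:{ intros; rewrite FP_exc; auto. }
  rewrite (count_kappa s (seq 1 n)) by (intros E HE; apply in_seq in HE; lia). fold (exc_list n).
  split.
  - intros [[Hna _]|[_ Hm]]. contradiction. subst; auto.
  - intros R'. right. split; auto. apply (root_mult_unique _ _ _ _ R' R).
Qed.

(* At s = 0 each arc chain is diagonal with positive determinant, so the
   selected entry vanishes iff the two parities differ. *)
Lemma entry_diag b b' X : r12 X = 0 -> r21 X = 0 -> r11 X <> 0 -> r22 X <> 0 -> (entry b b' X = 0 <-> b <> b').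
Proof. intros H1 H2 H3 H4. destruct b, b'; simpl; split; intros; try congruence; try contradiction; auto. Qed.

Lemma decP_neq (A B : Prop) : decP A <> decP B <-> ~ (A <-> B).
Proof.
  unfold decP. destruct (ClassicalDescription.excluded_middle_informative A);
  destruct (ClassicalDescription.excluded_middle_informative B); split; intros; try tauto; try congruence.
Qed.

Lemma arc_entry_at_0 E : (1 <= E <= n)%nat -> exceptional (alpha E) ->
  (arc_entry E 0 = 0 <-> ~ (O_is_even (al (prev_exc n alpha E)) <-> O_is_even (alpha E))).
Proof.
  intros HE Hx. unfold arc_entry.
  destruct (chain_at_0 (arc_factors E)) as [H12 H21].
  pose proof (det_chain_pos (arc_factors E) 0 (admissible_arc_factors E)) as Hd. unfold rdet in Hd. rewrite H12, H21 in Hd.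
  rewrite entry_diag; auto. 2,3: intro Z; rewrite Z in Hd; lra.
  unfold parity. rewrite decP_neq. split; intros H1 H2; apply H1; tauto.
Qed.

Lemma count_zero L : (forall E, In E L -> (1 <= E <= n)%nat) ->
  length (filter (fun E => decP (exceptional (alpha E) /\
             ~ (O_is_even (al (prev_exc n alpha E)) <-> O_is_even (alpha E)))) L) =
  total_order (filter (fun j => excb (al j)) L) 0.
Proof.
  induction L as [|x L IH]; intros HL; simpl; auto.
  assert (Hx : (1 <= x <= n)%nat) by (apply HL; simpl; auto).
  specialize (IH ltac:(intros; apply HL; simpl; auto)).
  destruct (excb (al x)) eqn:Ex.
  - assert (Hxx : exceptional (alpha x)) by (apply excb_iff; auto).
    rewrite total_order_cons. unfold arc_order at 1.
    destruct (decP (arc_entry x 0 = 0)) eqn:Dg.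
    + apply (proj1 (decP_iff _)) in Dg. rewrite decP_true. simpl. rewrite IH. auto.
      split; auto. apply arc_entry_at_0; auto.
    + rewrite decP_false. simpl. rewrite IH. auto. intros [_ Hk]. apply arc_entry_at_0 in Hk; auto.
      apply (decP_f _ Dg); auto.
  - rewrite decP_false. auto. intros [Hk _]. apply excb_iff in Hk; auto. congruence.
Qed.

Lemma mult_zero_exc m : (root_mult (FP n alpha ell) 0 m <-> INR m = 2 * qe_mult_zero n alpha).
Proof.
  assert (R := root_mult_prodL (exc_list n) 0).
  apply (root_mult_ext _ (FP n alpha ell)) in R. 2:{ intros; rewrite FP_exc; auto. }
  unfold qe_mult_zero. rewrite decP_true by auto.
  rewrite count_zero by (intros E HE; apply in_seq in HE; lia). fold (exc_list n).
  split.
  - intros R'. rewrite (root_mult_unique _ _ _ _ R' R). field.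
  - intros E. assert (m = total_order (exc_list n) 0). { apply INR_eq. rewrite E. field. } subst; auto.
Qed.

End Exceptional.

Theorem theorem2p11 (n : nat) (alpha ell : nat -> R)
  (Hn : (1 <= n)%nat)
  (Halpha : forall j, (1 <= j <= n)%nat -> 0 < alpha j < PI)
  (Hell : forall j, (1 <= j <= n)%nat -> 0 < ell j) :
  (forall sigma, 0 <= sigma ->
     (quasi_eigenvalue n alpha ell sigma <-> FP n alpha ell sigma = 0)) /\
  (forall sigma m, 0 < sigma -> quasi_eigenvalue n alpha ell sigma ->
     (qe_mult_pos n alpha ell sigma m <-> root_mult (FP n alpha ell) sigma m)) /\
  (quasi_eigenvalue n alpha ell 0 ->
     forall m, (root_mult (FP n alpha ell) 0 m <-> INR m = 2 * qe_mult_zero n alpha)).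
Proof.
  destruct (ClassicalDescription.excluded_middle_informative (any_exceptional n alpha))
    as [Hexc|Hnexc].
  -
    split; [|split].
    + intros s Hs. apply qe_iff_exc; auto.
    + intros s m Hs HQ. apply mult_pos_exc; auto.
    + intros HQ m. apply mult_zero_exc; auto.
  -
    split; [|split].
    + intros s Hs. apply qe_iff_nonexc; auto.
    + intros s m Hs HQ. apply mult_pos_nonexc; auto.
    + intros HQ m. apply mult_zero_nonexc; auto.
Qed.
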